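(* Let $h,h'$ be HPS with $h\Rrightarrow h'$, let $P$ be an H-Qbricks program that uses only registers occurring in $h'$, and let $h''$ be an HPS such that $h\otimes h''$ is defined. Then (1) $h\otimes h''\Rrightarrow h'\otimes h''$ (and hence also $h''\otimes h\Rrightarrow h''\otimes h'$), and (2) $[\![P]\!](h)\Rrightarrow[\![P]\!](h')$.
   Context: HPS: $h=\langle P,o,s\rangle_{su}$ with $su$ a finite set of Boolean path variables; $o_{Qu}$ a finite map from quantum addresses to Boolean polynomials in input variables $x_i$ and path variables; $o_{Cl}$ a stack of maps from classical addresses to such polynomials (top = current); $P$ a dyadic-coefficient polynomial; $s$ a real scalar expression. $\xi(h)(\eta)=\sum_{\vec y\in\{0,1\}^{su},o_{Cl}(\vec y)=\eta}s(\vec y)e^{2\pi iP(\vec y)}|o_{Qu}(\vec y)\rangle$ for histories $\eta$, and $|h|=\sqrt{\sum_\eta\|\xi(h)(\eta)\|^2}$. Tensor: $h_1\otimes h_2=\langle P_1+P_2,o_1\cup o_2,s_1s_2\rangle_{su_1\cup su_2}$ when supports are disjoint and the quantum addresses and classical (address, time) cells are disjoint (it is commutative, registers being indexed by addresses). $h_1\boxplus h_2$: support $su_1\cup su_2\cup\{y_f\}$, $y_f$ fresh, equal to $h_1$ (scalar times $\prod_{y\in su_2\setminus su_1}y$) on $y_f=0$ and $h_2$ (scalar times $\prod_{y\in su_1\setminus su_2}y$) on $y_f=1$. Here $h\Rrightarrow h'$ means there is an HPS $h_a$ with $|h_a|=1$, containing no input variables, such that $h=h'\otimes h_a$. Programs: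 Skip; Init $q$; Apply $G(q)$, $G\in\{H,X\}\cup\{Z_k\}$; Measure$(q,c)$; $c_1:=f(c_2)$; $p;p'$; For with constant bounds; If $b$ then $p$ else $p'$ ($b$ classical, or quantum with unitary branches disjoint from $b$'s registers). Semantics ($\lceil q\rceil$ = current contents): Skip identity; Init sets $q$ to $0$; $H$: fresh $y$ in support, scalar times $1/\sqrt2$, phase plus $y\lceil q\rceil/2$, $q:=y$; $X$: $q:=1\oplus\lceil q\rceil$; $Z_k$: phase plus $\lceil q\rceil/2^k$; Measure$(q,c)$ pushes onto $o_{Cl}$ a copy of the top entry with $c$ holding $\lceil q\rceil$; $c_1:=f(c_2)$ pushes a copy with $c_1$ holding $f(\lceil c_2\rceil)$; sequencing is composition; For unfolds; $[\![\mathrm{If}\,b\,\mathrm{then}\,p\,\mathrm{else}\,p']\!]h=[\![p]\!](b\cdot h)\boxplus[\![p']\!]((1-b)\cdot h)$, $b\cdot h$ multiplying the scalar by $b$. *)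

From Stdlib Require Import Bool Reals Lra Lia ZArith List Arith ClassicalEpsilon.
Import ListNotations.
Open Scope R_scope.

Set Implicit Arguments.

(** A valuation of the variables: input variables x_i and path variables y_j
    (both indexed by nat). *)
Record env := Env { ein : nat -> bool ; epath : nat -> bool }.

(** Boolean polynomials (over GF(2)) are represented by the Boolean function of
    the variables they denote; real-valued expressions (phase polynomial,
    scalar) likewise.  The well-formedness predicate [wf_hps] below restricts
    them to functions depending on finitely many input variables and only on
    the path variables of the support, which is exactly the class of
    Boolean polynomials (resp. dyadic polynomials for the phase). *)
Definition bpoly := env -> bool.
Definition rpoly := env -> R.

Definition amap := nat -> option bpoly.
Definition emptymap : amap := fun _ => None.
Definition mupd (m : amap) (a : nat) (p : bpoly) : amap :=
  fun a' => if Nat.eqb a' a then Some p else m a'.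
Definition mget (m : amap) (a : nat) : bpoly :=
  match m a with Some p => p | None => fun _ => false end.

(** An HPS  <P, o, s>_su.
    - [hsu] : the support su (list of path-variable indices, duplicate free)
    - [hqu] : o_Qu, finite map quantum address -> Boolean polynomial
    - [hcl] : o_Cl, stack of maps classical address -> Boolean polynomial,
              indexed by time: element 0 is the bottom (oldest), the LAST
              element is the top (current memory)
    - [hP]  : phase polynomial P
    - [hs]  : scalar s *)
Record HPS := mkHPS {
  hsu : list nat ;
  hqu : amap ;
  hcl : list amap ;
  hP  : rpoly ;
  hs  : rpoly }.

Definition htop (h : HPS) : amap := last (hcl h) emptymap.

Definition curq (h : HPS) (q : nat) : bpoly := mget (hqu h) q.
Definition curc (h : HPS) (c : nat) : bpoly := mget (htop h) c.

Definition dep_only {T : Type} (X Y : nat -> Prop) (f : env -> T) : Prop :=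
  forall e1 e2,
    (forall i, X i -> ein e1 i = ein e2 i) ->
    (forall j, Y j -> epath e1 j = epath e2 j) ->
    f e1 = f e2.

Definition finite_dom (m : amap) : Prop :=
  exists l : list nat, forall a, m a <> None -> In a l.

Definition dyadic (r : R) : Prop := exists (z : Z) (k : nat), r = IZR z / 2 ^ k.

(** An HPS is well formed: duplicate-free support, finite maps, every
    expression uses finitely many input variables and only path variables of
    the support, and the phase polynomial has dyadic coefficients (for a
    function of finitely many Boolean variables, this is equivalent to taking
    dyadic values). *)
Definition wf_hps (h : HPS) : Prop :=
  NoDup (hsu h) /\ finite_dom (hqu h) /\ Forall finite_dom (hcl h) /\
  exists I : list nat,
    let X := fun i => In i I in
    let Y := fun j => In j (hsu h) in
    (forall q p, hqu h q = Some p -> dep_only X Y p) /\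
    (forall m, In m (hcl h) -> forall c p, m c = Some p -> dep_only X Y p) /\
    dep_only X Y (hP h) /\ dep_only X Y (hs h) /\
    (forall e, dyadic (hP h e)).

Definition no_input (h : HPS) : Prop :=
  let X := fun _ : nat => False in
  let Y := fun j => In j (hsu h) in
  (forall q p, hqu h q = Some p -> dep_only X Y p) /\
  (forall m, In m (hcl h) -> forall c p, m c = Some p -> dep_only X Y p) /\
  dep_only X Y (hP h) /\ dep_only X Y (hs h).

Definition fupd (y : nat -> bool) (j : nat) (b : bool) : nat -> bool :=
  fun j' => if Nat.eqb j' j then b else y j'.

(** all assignments \vec y ∈ {0,1}^su (variables outside su set to false) *)
Fixpoint assigns (l : list nat) : list (nat -> bool) :=
  match l with
  | [] => [fun _ => false]
  | j :: l' => flat_map (fun y => [fupd y j false; fupd y j true]) (assigns l')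
  end.

Definition ceqb {T : Type} (a b : T) : bool :=
  if excluded_middle_informative (a = b) then true else false.
Fixpoint cdedup {T : Type} (l : list T) : list T :=
  match l with
  | [] => []
  | a :: l' => if existsb (ceqb a) l' then cdedup l' else a :: cdedup l'
  end.

Definition rsum {T : Type} (l : list T) (f : T -> R) : R :=
  fold_right Rplus 0 (map f l).

Definition eval_map (m : amap) (e : env) : nat -> option bool :=
  fun a => match m a with Some p => Some (p e) | None => None end.

Definition hist_at (h : HPS) (e : env) : list (nat -> option bool) :=
  map (fun m => eval_map m e) (hcl h).
Definition ket_at (h : HPS) (e : env) : nat -> option bool := eval_map (hqu h) e.

(** |h|^2 = Σ_η ‖ξ(h)(η)‖^2 = Σ_η Σ_k |Σ_{y : o_Cl(y)=η, o_Qu(y)=k} s(y) e^{2πiP(y)}|^2,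
    at input valuation [x] (η and k range over the realised histories / kets;
    the other terms are zero). *)
Definition hps_norm2 (h : HPS) (x : nat -> bool) : R :=
  let A := assigns (hsu h) in
  let E := fun y => Env x y in
  rsum (cdedup (map (fun y => hist_at h (E y)) A)) (fun eta =>
  rsum (cdedup (map (fun y => ket_at h (E y)) A)) (fun k =>
    let sel := fun y => ceqb (hist_at h (E y)) eta && ceqb (ket_at h (E y)) k in
    let re := rsum A (fun y => if sel y then hs h (E y) * cos (2 * PI * hP h (E y)) else 0) in
    let im := rsum A (fun y => if sel y then hs h (E y) * sin (2 * PI * hP h (E y)) else 0) in
    re * re + im * im)).

Definition hps_norm (h : HPS) (x : nat -> bool) : R := sqrt (hps_norm2 h x).

Definition munion (m1 m2 : amap) : amap :=
  fun a => match m1 a with Some p => Some p | None => m2 a end.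

Definition tensor (h1 h2 : HPS) : HPS :=
  mkHPS (hsu h1 ++ hsu h2)
        (munion (hqu h1) (hqu h2))
        (map (fun mm => munion (fst mm) (snd mm)) (combine (hcl h1) (hcl h2)))
        (fun e => hP h1 e + hP h2 e)
        (fun e => hs h1 e * hs h2 e).

(** h1 ⊗ h2 is defined: disjoint supports, disjoint quantum addresses,
    disjoint classical (address, time) cells; the two stacks are indexed by
    the same (global) time, i.e. have the same length. *)
Definition tensor_ok (h1 h2 : HPS) : Prop :=
  (forall j, In j (hsu h1) -> ~ In j (hsu h2)) /\
  (forall q, hqu h1 q <> None -> hqu h2 q = None) /\
  length (hcl h1) = length (hcl h2) /\
  (forall t c, nth t (hcl h1) emptymap c <> None -> nth t (hcl h2) emptymap c = None).

Definition rename_env (rho : nat -> nat) (e : env) : env :=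
  Env (ein e) (fun j => epath e (rho j)).

Definition rename_map (rho : nat -> nat) (m : amap) : amap :=
  fun a => match m a with Some p => Some (fun e => p (rename_env rho e)) | None => None end.

(** path variable y_j is renamed into y_(rho j) *)
Definition rename (rho : nat -> nat) (h : HPS) : HPS :=
  mkHPS (map rho (hsu h)) (rename_map rho (hqu h)) (map (rename_map rho) (hcl h))
        (fun e => hP h (rename_env rho e)) (fun e => hs h (rename_env rho e)).

Definition map_eq (m1 m2 : amap) : Prop :=
  forall a, match m1 a, m2 a with
            | Some p1, Some p2 => forall e, p1 e = p2 e
            | None, None => True
            | _, _ => False
            end.

Definition hps_eq (h1 h2 : HPS) : Prop :=
  (forall j, In j (hsu h1) <-> In j (hsu h2)) /\
  map_eq (hqu h1) (hqu h2) /\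
  length (hcl h1) = length (hcl h2) /\
  (forall t, map_eq (nth t (hcl h1) emptymap) (nth t (hcl h2) emptymap)) /\
  (forall e, hP h1 e = hP h2 e) /\ (forall e, hs h1 e = hs h2 e).

Definition alpha_eq (h1 h2 : HPS) : Prop :=
  exists rho rho' : nat -> nat,
    (forall j, rho' (rho j) = j) /\ (forall j, rho (rho' j) = j) /\
    hps_eq h1 (rename rho h2).

Definition hps_impl (h h' : HPS) : Prop :=
  exists ha : HPS,
    wf_hps ha /\ no_input ha /\ (forall x, hps_norm ha x = 1) /\
    tensor_ok h' ha /\ alpha_eq h (tensor h' ha).

Inductive bexp : Type :=
| BConst (b : bool)
| BCReg (c : nat)
| BQReg (q : nat)
| BNot (b : bexp)
| BAnd (b1 b2 : bexp)
| BXor (b1 b2 : bexp).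

Inductive gate : Type := GH | GX | GZ (k : nat).

Inductive prog : Type :=
| Skip
| Init (q : nat)
| Apply (g : gate) (q : nat)
| Measure (q c : nat)
| Assign (c1 : nat) (f : bool -> bool) (c2 : nat)
| Seq (p1 p2 : prog)
| For (lo hi : nat) (body : nat -> prog)               (* for i = lo to hi-1 do body i *)
| If (b : bexp) (p1 p2 : prog).

Fixpoint bexp_classical (b : bexp) : Prop :=
  match b with
  | BConst _ | BCReg _ => True
  | BQReg _ => False
  | BNot b1 => bexp_classical b1
  | BAnd b1 b2 | BXor b1 b2 => bexp_classical b1 /\ bexp_classical b2
  end.

Fixpoint bexp_quantum (b : bexp) : Prop :=
  match b with
  | BConst _ | BQReg _ => True
  | BCReg _ => False
  | BNot b1 => bexp_quantum b1
  | BAnd b1 b2 | BXor b1 b2 => bexp_quantum b1 /\ bexp_quantum b2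
  end.

Fixpoint bexp_uses_q (b : bexp) (q : nat) : Prop :=
  match b with
  | BConst _ | BCReg _ => False
  | BQReg q' => q' = q
  | BNot b1 => bexp_uses_q b1 q
  | BAnd b1 b2 | BXor b1 b2 => bexp_uses_q b1 q \/ bexp_uses_q b2 q
  end.

Fixpoint prog_uses_q (p : prog) (q : nat) : Prop :=
  match p with
  | Skip | Assign _ _ _ => False
  | Init q' | Apply _ q' | Measure q' _ => q' = q
  | Seq p1 p2 => prog_uses_q p1 q \/ prog_uses_q p2 q
  | For lo hi body => exists i, lo <= i < hi /\ prog_uses_q (body i) q
  | If b p1 p2 => bexp_uses_q b q \/ prog_uses_q p1 q \/ prog_uses_q p2 q
  end%nat.

Fixpoint unitary (p : prog) : Prop :=
  match p with
  | Skip | Apply _ _ => True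
  | Init _ | Measure _ _ | Assign _ _ _ => False
  | Seq p1 p2 => unitary p1 /\ unitary p2
  | For lo hi body => forall i, lo <= i < hi -> unitary (body i)
  | If b p1 p2 => bexp_quantum b /\ unitary p1 /\ unitary p2 /\
                  (forall q, bexp_uses_q b q -> ~ prog_uses_q p1 q /\ ~ prog_uses_q p2 q)
  end%nat.

Fixpoint valid_prog (p : prog) : Prop :=
  match p with
  | Skip | Init _ | Apply _ _ | Measure _ _ | Assign _ _ _ => True
  | Seq p1 p2 => valid_prog p1 /\ valid_prog p2
  | For lo hi body => forall i, lo <= i < hi -> valid_prog (body i)
  | If b p1 p2 =>
      (bexp_classical b /\ valid_prog p1 /\ valid_prog p2) \/
      (bexp_quantum b /\ unitary p1 /\ unitary p2 /\
       (forall q, bexp_uses_q b q -> ~ prog_uses_q p1 q /\ ~ prog_uses_q p2 q))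
  end%nat.

Fixpoint bexp_in (h : HPS) (b : bexp) : Prop :=
  match b with
  | BConst _ => True
  | BCReg c => htop h c <> None
  | BQReg q => hqu h q <> None
  | BNot b1 => bexp_in h b1
  | BAnd b1 b2 | BXor b1 b2 => bexp_in h b1 /\ bexp_in h b2
  end.

Fixpoint uses_only (h : HPS) (p : prog) : Prop :=
  match p with
  | Skip => True
  | Init q | Apply _ q => hqu h q <> None
  | Measure q c => hqu h q <> None /\ htop h c <> None
  | Assign c1 _ c2 => htop h c1 <> None /\ htop h c2 <> None
  | Seq p1 p2 => uses_only h p1 /\ uses_only h p2
  | For lo hi body => forall i, lo <= i < hi -> uses_only h (body i)
  | If b p1 p2 => bexp_in h b /\ uses_only h p1 /\ uses_only h p2
  end%nat.

Definition b2R (b : bool) : R := if b then 1 else 0.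

Definition fresh (l : list nat) : nat := S (fold_right Nat.max 0%nat l).

Definition set_qu (h : HPS) (m : amap) : HPS := mkHPS (hsu h) m (hcl h) (hP h) (hs h).
Definition push_cl (h : HPS) (m : amap) : HPS :=
  mkHPS (hsu h) (hqu h) (hcl h ++ [m]) (hP h) (hs h).

Definition sem_gate (g : gate) (q : nat) (h : HPS) : HPS :=
  match g with
  | GH =>
      let y := fresh (hsu h) in
      mkHPS (hsu h ++ [y])
            (mupd (hqu h) q (fun e => epath e y))
            (hcl h)
            (fun e => hP h e + b2R (epath e y && curq h q e) / 2)
            (fun e => hs h e * / sqrt 2)
  | GX => set_qu h (mupd (hqu h) q (fun e => negb (curq h q e)))
  | GZ k => mkHPS (hsu h) (hqu h) (hcl h)
                  (fun e => hP h e + b2R (curq h q e) / 2 ^ k) (hs h)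
  end.

Fixpoint eval_bexp (h : HPS) (b : bexp) : bpoly :=
  match b with
  | BConst b0 => fun _ => b0
  | BCReg c => curc h c
  | BQReg q => curq h q
  | BNot b1 => fun e => negb (eval_bexp h b1 e)
  | BAnd b1 b2 => fun e => eval_bexp h b1 e && eval_bexp h b2 e
  | BXor b1 b2 => fun e => xorb (eval_bexp h b1 e) (eval_bexp h b2 e)
  end.

Definition scale (g : bpoly) (h : HPS) : HPS :=
  mkHPS (hsu h) (hqu h) (hcl h) (hP h) (fun e => hs h e * b2R (g e)).

(** padding of a classical stack to length n (memory persists) *)
Definition pad (l : list amap) (n : nat) : list amap :=
  l ++ repeat (last l emptymap) (n - length l).

Definition mselect (yf : nat) (m1 m2 : amap) : amap :=
  fun a => match m1 a, m2 a with
           | None, None => None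
           | _, _ => Some (fun e => if epath e yf then mget m2 a e else mget m1 a e)
           end.

Definition lminus (l1 l2 : list nat) : list nat :=
  filter (fun j => negb (existsb (Nat.eqb j) l2)) l1.

Definition rprod (l : list nat) (e : env) : R := fold_right Rmult 1 (map (fun y => b2R (epath e y)) l).

Definition hplus (h1 h2 : HPS) : HPS :=
  let yf := fresh (hsu h1 ++ hsu h2) in
  let n := Nat.max (length (hcl h1)) (length (hcl h2)) in
  mkHPS (hsu h1 ++ lminus (hsu h2) (hsu h1) ++ [yf])
        (mselect yf (hqu h1) (hqu h2))
        (map (fun mm => mselect yf (fst mm) (snd mm))
             (combine (pad (hcl h1) n) (pad (hcl h2) n)))
        (fun e => if epath e yf then hP h2 e else hP h1 e)
        (fun e => if epath e yf
                  then hs h2 e * rprod (lminus (hsu h1) (hsu h2)) e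
                  else hs h1 e * rprod (lminus (hsu h2) (hsu h1)) e).

Fixpoint sem (p : prog) (h : HPS) : HPS :=
  match p with
  | Skip => h
  | Init q => set_qu h (mupd (hqu h) q (fun _ => false))
  | Apply g q => sem_gate g q h
  | Measure q c => push_cl h (mupd (htop h) c (curq h q))
  | Assign c1 f c2 => push_cl h (mupd (htop h) c1 (fun e => f (curc h c2 e)))
  | Seq p1 p2 => sem p2 (sem p1 h)
  | For lo hi body =>
      (fix loop (n i : nat) (h0 : HPS) {struct n} : HPS :=
         match n with
         | O => h0
         | S n' => loop n' (S i) (sem (body i) h0)
         end) (hi - lo)%nat lo h
  | If b p1 p2 =>
      let g := eval_bexp h b in
      hplus (sem p1 (scale g h)) (sem p2 (scale (fun e => negb (g e)) h))
  end.

(* Proof idea.  [h ⇛ h'] says that, after a bijective renaming [ρ] of path variables,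
   [h = h' ⊗ h_a] for an ancilla [h_a] of norm 1 without input variables.  A program using
   only registers of [h'] never touches [h_a], so running it on [h' ⊗ h_a] yields
   [⟦P⟧(h') ⊗ h_a], with [h_a] unchanged except that its classical stack is padded to the
   new history length; padding and renaming keep [h_a] well formed, input free and of
   norm 1.  The rest is bookkeeping of path variables: [h_a] is first renamed away from
   every variable [⟦P⟧] can create, and [ρ] is extended to the variables created by [H] and
   [If], matching those of the two runs in creation order.  Part (1) is the same argument
   with [ρ] extended by the identity on [h''], and its mirrored form follows because [⊗] is
   commutative up to the order of the support. *)

From Stdlib Require Import Reals List.
From Stdlib Require Import FinFun Bool Lra Lia Arith ClassicalEpsilon FunctionalExtensionality.
Import ListNotations.
Open Scope R_scope.

(** * Fresh variables and bijections *)

Lemma fresh_list_max l : fresh l = S (list_max l).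
Proof. reflexivity. Qed.

Lemma le_list_max x l : In x l -> (x <= list_max l)%nat.
Proof.
  intros Hx. assert (H := le_n (list_max l)).
  apply list_max_le in H. rewrite Forall_forall in H. auto.
Qed.

Lemma list_max_incl l l' : (forall x, In x l -> In x l') -> (list_max l <= list_max l')%nat.
Proof.
  intros H. apply list_max_le. rewrite Forall_forall. intros x Hx. apply le_list_max; auto.
Qed.

Lemma list_max_interval l l0 k :
  (forall j, In j l <-> In j l0 \/ (list_max l0 < j <= list_max l0 + k)%nat) ->
  list_max l = (list_max l0 + k)%nat.
Proof.
  intros H. apply Nat.le_antisymm.
  - apply list_max_le. rewrite Forall_forall. intros x Hx.
    apply H in Hx as [Hx|Hx]; [apply le_list_max in Hx|]; lia.
  - destruct k.
    + rewrite Nat.add_0_r. apply list_max_incl. intros x Hx. apply H; auto.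
    + apply le_list_max, H. right. lia.
Qed.

Definition inverses (r r' : nat -> nat) : Prop :=
  (forall j, r' (r j) = j) /\ (forall j, r (r' j) = j).

Lemma inverses_inj r r' a b : inverses r r' -> r a = r b -> a = b.
Proof. intros [H _] E. rewrite <- (H a), <- (H b), E. reflexivity. Qed.

Lemma inverses_id : inverses (fun j => j) (fun j => j).
Proof. split; auto. Qed.

Lemma inverses_comp r r' s s' :
  inverses r r' -> inverses s s' -> inverses (fun j => r (s j)) (fun j => s' (r' j)).
Proof. intros [A1 A2] [B1 B2]. split; intros j; rewrite ?A1, ?B1, ?A2, ?B2; auto. Qed.

Definition transp (a b x : nat) : nat :=
  if Nat.eqb x a then b else if Nat.eqb x b then a else x.

Lemma transp_invol a b x : transp a b (transp a b x) = x.
Proof.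
  unfold transp.
  destruct (Nat.eqb_spec x a), (Nat.eqb_spec x b); subst;
    repeat (rewrite Nat.eqb_refl || match goal with
      |- context [Nat.eqb ?u ?v] => destruct (Nat.eqb_spec u v) end); congruence.
Qed.

Lemma transp_l a b : transp a b a = b.
Proof. unfold transp. rewrite Nat.eqb_refl. reflexivity. Qed.

Lemma transp_other a b x : x <> a -> x <> b -> transp a b x = x.
Proof.
  intros. unfold transp. destruct (Nat.eqb_spec x a), (Nat.eqb_spec x b); congruence.
Qed.

(* Each new point [v] is fixed by post-composing with the transposition of [r v] and [g v]. *)
Lemma inverses_extend_partial (g : nat -> nat) : forall l S r r', inverses r r' ->
  (forall j, In j S -> r j = g j) ->
  (forall a b, In a (S ++ l) -> In b (S ++ l) -> g a = g b -> a = b) ->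
  exists r2 r2', inverses r2 r2' /\ forall j, In j (S ++ l) -> r2 j = g j.
Proof.
  induction l as [|v l IH]; intros S r r' Hr HS Hg.
  { exists r, r'. rewrite app_nil_r. auto. }
  assert (Hperm : forall j, In j ((v :: S) ++ l) <-> In j (S ++ v :: l)).
  { intros j. rewrite !in_app_iff. simpl. tauto. }
  assert (Hg' : forall a b, In a ((v :: S) ++ l) -> In b ((v :: S) ++ l) -> g a = g b -> a = b).
  { intros a b Ha Hb. apply Hg; apply Hperm; auto. }
  assert (Hconcl :
    (exists r2 r2', inverses r2 r2' /\ forall j, In j ((v :: S) ++ l) -> r2 j = g j) ->
     exists r2 r2', inverses r2 r2' /\ forall j, In j (S ++ v :: l) -> r2 j = g j).
  { intros (r2 & r2' & H2 & E2). exists r2, r2'. split; auto. intros j Hj. apply E2, Hperm, Hj. }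
  apply Hconcl. destruct (in_dec Nat.eq_dec v S) as [Hv|Hv].
  - apply (IH _ r r'); auto. intros j [<-|Hj]; auto.
  - apply (IH _ (fun x => transp (r v) (g v) (r x)) (fun x => r' (transp (r v) (g v) x))); auto.
    + destruct Hr as [R1 R2]. split; intros j; rewrite ?transp_invol, ?R1, ?R2, ?transp_invol; auto.
    + intros j [<-|Hj]; [apply transp_l|]. rewrite (HS j Hj). apply transp_other.
      * rewrite <- (HS j Hj). intros E. apply (inverses_inj _ _ _ _ Hr) in E. subst. contradiction.
      * intros E. apply Hg in E; [subst; contradiction| |]; rewrite in_app_iff; simpl; auto.
Qed.

Lemma inverses_extend (g : nat -> nat) l :
  (forall a b, In a l -> In b l -> g a = g b -> a = b) ->
  exists r r', inverses r r' /\ forall j, In j l -> r j = g j.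
Proof. intros Hg. apply (inverses_extend_partial g l [] _ _ inverses_id); simpl; tauto. Qed.

Definition piecewise (A : list nat) (f1 f2 : nat -> nat) (j : nat) : nat :=
  if in_dec Nat.eq_dec j A then f1 j else f2 j.

Lemma piecewise_injective A L f1 f2 :
  (forall a b, In a A -> In b A -> f1 a = f1 b -> a = b) ->
  (forall a b, In a L -> In b L -> ~ In a A -> ~ In b A -> f2 a = f2 b -> a = b) ->
  (forall a b, In a A -> In b L -> ~ In b A -> f1 a <> f2 b) ->
  forall a b, In a L -> In b L -> piecewise A f1 f2 a = piecewise A f1 f2 b -> a = b.
Proof.
  intros H1 H2 H12 a b Ha Hb. unfold piecewise.
  destruct (in_dec Nat.eq_dec a A), (in_dec Nat.eq_dec b A); auto.
  - intros E. exfalso. apply (H12 a b); auto.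
  - intros E. exfalso. apply (H12 b a); auto.
Qed.

(** * Padding, supports and history lengths *)

Lemma last_nth (l : list amap) d : last l d = nth (pred (length l)) l d.
Proof. induction l as [|a [|b l] IH]; simpl in *; auto. Qed.

Lemma length_pad l n : (length l <= n)%nat -> length (pad l n) = n.
Proof. intros. unfold pad. rewrite length_app, repeat_length. lia. Qed.

Lemma last_pad l n : last (pad l n) emptymap = last l emptymap.
Proof.
  unfold pad. destruct (n - length l)%nat as [|k]; [simpl; rewrite app_nil_r; auto|].
  replace (S k) with (k + 1)%nat by lia. rewrite repeat_app, app_assoc. simpl. apply last_last.
Qed.

Lemma pad_length l : pad l (length l) = l.
Proof. unfold pad. rewrite Nat.sub_diag. apply app_nil_r. Qed.

Lemma pad_pad l n1 n2 : (length l <= n1 <= n2)%nat -> pad (pad l n1) n2 = pad l n2.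
Proof.
  intros H. unfold pad at 1. rewrite last_pad, length_pad by lia.
  unfold pad. rewrite <- app_assoc, <- repeat_app. do 2 f_equal. lia.
Qed.

Lemma nth_pad l n t : (length l <= n)%nat -> (t < n)%nat ->
  nth t (pad l n) emptymap = nth (Nat.min t (pred (length l))) l emptymap.
Proof.
  intros H1 H2. unfold pad. destruct (Nat.lt_ge_cases t (length l)).
  - rewrite app_nth1 by auto. f_equal. lia.
  - rewrite app_nth2, nth_repeat_lt, last_nth by lia. f_equal. lia.
Qed.

Lemma nth_pad_min l n N t : (length l <= n <= N)%nat -> (t < N)%nat ->
  nth (Nat.min t (pred n)) (pad l n) emptymap = nth t (pad l N) emptymap.
Proof.
  intros H1 H2. destruct (Nat.eq_dec n 0) as [->|E].
  - destruct l; simpl in H1; [|lia]. unfold pad. simpl. rewrite nth_repeat.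
    destruct (Nat.min t 0); auto.
  - rewrite !nth_pad by lia. f_equal. lia.
Qed.

Lemma in_pad m l n : In m (pad l n) -> In m l \/ m = emptymap.
Proof.
  unfold pad. rewrite in_app_iff. intros [H|H]; auto. apply repeat_spec in H. subst.
  destruct l as [|a l] using rev_ind; auto. rewrite last_last. left. apply in_app_iff. simpl. auto.
Qed.

Lemma In_lminus j l1 l2 : In j (lminus l1 l2) <-> In j l1 /\ ~ In j l2.
Proof.
  unfold lminus. rewrite filter_In, negb_true_iff, <- not_true_iff_false, existsb_exists.
  split; intros [H1 H2]; split; auto.
  - intros H. apply H2. exists j. rewrite Nat.eqb_refl. auto.
  - intros (x & Hx & E). apply Nat.eqb_eq in E. subst. auto.
Qed.

Fixpoint unroll_for (body : nat -> prog) (n i : nat) : prog :=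
  match n with O => Skip | S n' => Seq (body i) (unroll_for body n' (S i)) end.

Lemma sem_For lo hi body : sem (For lo hi body) = sem (unroll_for body (hi - lo) lo).
Proof.
  extensionality h. simpl. generalize (hi - lo)%nat as n. intros n. revert lo h.
  induction n; intros; simpl; auto.
Qed.

Fixpoint new_vars (p : prog) : nat :=
  match p with
  | Apply GH _ => 1
  | Seq p1 p2 => new_vars p1 + new_vars p2
  | For lo hi body =>
      (fix loop (n i : nat) {struct n} : nat :=
         match n with O => O | S n' => new_vars (body i) + loop n' (S i) end) (hi - lo) lo
  | If _ p1 p2 => S (Nat.max (new_vars p1) (new_vars p2))
  | _ => 0
  end%nat.

Lemma new_vars_For lo hi body : new_vars (For lo hi body) = new_vars (unroll_for body (hi - lo) lo).
Proof.
  simpl. generalize (hi - lo)%nat as n. intros n. revert lo.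
  induction n; intros; simpl; auto.
Qed.

Lemma prog_ind_unroll (Q : prog -> Prop) :
  Q Skip -> (forall q, Q (Init q)) -> (forall g q, Q (Apply g q)) ->
  (forall q c, Q (Measure q c)) -> (forall c1 f c2, Q (Assign c1 f c2)) ->
  (forall p1 p2, Q p1 -> Q p2 -> Q (Seq p1 p2)) ->
  (forall b p1 p2, Q p1 -> Q p2 -> Q (If b p1 p2)) ->
  (forall lo hi body, Q (unroll_for body (hi - lo) lo) -> Q (For lo hi body)) ->
  forall p, Q p.
Proof.
  intros HSkip HInit HApply HMeasure HAssign HSeq HIf HFor. induction p; auto.
  apply HFor. generalize (hi - lo)%nat as n. intros n. revert lo. induction n; intros; simpl; auto.
Qed.

Lemma in_hsu_hplus_l X1 X2 j : In j (hsu X1) -> In j (hsu (hplus X1 X2)).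
Proof. intros. simpl. apply in_app_iff. auto. Qed.

Lemma in_hsu_hplus_r X1 X2 j : In j (hsu X2) -> In j (hsu (hplus X1 X2)).
Proof.
  intros. simpl. rewrite !in_app_iff, In_lminus.
  destruct (in_dec Nat.eq_dec j (hsu X1)); auto.
Qed.

Lemma in_hsu_hplus_fresh X1 X2 : In (fresh (hsu X1 ++ hsu X2)) (hsu (hplus X1 X2)).
Proof. simpl. rewrite !in_app_iff. simpl. auto. Qed.

Lemma length_hcl_hplus X1 X2 :
  length (hcl (hplus X1 X2)) = Nat.max (length (hcl X1)) (length (hcl X2)).
Proof. simpl. rewrite length_map, length_combine, !length_pad by lia. lia. Qed.

Lemma in_hsu_sem : forall P X j, In j (hsu (sem P X)) <->
  In j (hsu X) \/ (list_max (hsu X) < j <= list_max (hsu X) + new_vars P)%nat.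
Proof.
  apply (prog_ind_unroll (fun P => forall X j, In j (hsu (sem P X)) <->
     In j (hsu X) \/ (list_max (hsu X) < j <= list_max (hsu X) + new_vars P)%nat));
    try (intros; simpl; split; [intros H; left; auto | intros [H|H]; [auto|lia]]).
  - intros g q X j. destruct g; simpl;
      try (split; [intros H; left; auto | intros [H|H]; [auto|lia]]).
    rewrite in_app_iff, fresh_list_max. simpl. split.
    + intros [H|[H|[]]]; [left; auto| right; lia].
    + intros [H|H]; [left; auto | right; left; lia].
  - intros p1 p2 IH1 IH2 X j. simpl.
    rewrite IH2, (list_max_interval _ _ _ (IH1 X)), IH1. split.
    + intros [[H|H]|H]; [left; auto | right; lia | right; lia].
    + intros [H|H]; [left; left; auto|].
      destruct (le_lt_dec j (list_max (hsu X) + new_vars p1)); [left; right|right]; lia.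
  - intros b p1 p2 IH1 IH2 X j. cbn [sem].
    set (g := eval_bexp X b).
    set (X1 := sem p1 (scale g X)). set (X2 := sem p2 (scale (fun e => negb (g e)) X)).
    assert (M1 := list_max_interval _ _ _ (IH1 (scale g X))). fold X1 in M1.
    assert (M2 := list_max_interval _ _ _ (IH2 (scale (fun e => negb (g e)) X))). fold X2 in M2.
    simpl in M1, M2. simpl hsu.
    rewrite !in_app_iff, In_lminus, fresh_list_max, list_max_app, M1, M2.
    unfold X1, X2. rewrite IH1, IH2. simpl.
    set (m := list_max (hsu X)).
    assert (Hm : forall x, In x (hsu X) -> (x <= m)%nat) by (intros; apply le_list_max; auto).
    split.
    + intros [[H|H]|[[[H|H] H']|[H|[]]]]; try (left; auto; fail); try (right; lia).
    + intros [H|H]; [left; left; auto|].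
      destruct (le_lt_dec j (m + new_vars p1)); [left; right; lia|].
      destruct (le_lt_dec j (m + new_vars p2)).
      * right. left. split; [right; lia|]. intros [H1|H1]; [apply Hm in H1|]; lia.
      * right. right. left. lia.
  - intros lo hi body IH X j. rewrite sem_For, new_vars_For. apply IH.
Qed.

Lemma list_max_hsu_sem P X : list_max (hsu (sem P X)) = (list_max (hsu X) + new_vars P)%nat.
Proof. apply list_max_interval, in_hsu_sem. Qed.

Lemma length_hcl_sem : forall P X, (length (hcl X) <= length (hcl (sem P X)))%nat.
Proof.
  apply (prog_ind_unroll (fun P => forall X, (length (hcl X) <= length (hcl (sem P X)))%nat));
    try (intros; simpl; rewrite ?length_app; simpl; lia).
  - intros g q X. destruct g; simpl; lia.
  - intros p1 p2 IH1 IH2 X. simpl. specialize (IH1 X). specialize (IH2 (sem p1 X)). lia.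
  - intros b p1 p2 IH1 IH2 X. cbn [sem]. rewrite length_hcl_hplus.
    specialize (IH1 (scale (eval_bexp X b) X)). simpl in IH1. lia.
  - intros lo hi body IH X. rewrite sem_For. apply IH.
Qed.

(** * Registers untouched by a program *)

Definition regs_disjoint (X ha : HPS) : Prop :=
  (forall q, hqu X q <> None -> hqu ha q = None) /\ length (hcl X) = length (hcl ha) /\
  (forall t c, nth t (hcl X) emptymap c <> None -> nth t (hcl ha) emptymap c = None).

Fixpoint bexp_avoids (ha : HPS) (b : bexp) : Prop :=
  match b with
  | BConst _ => True
  | BCReg c => htop ha c = None
  | BQReg q => hqu ha q = None
  | BNot b1 => bexp_avoids ha b1
  | BAnd b1 b2 | BXor b1 b2 => bexp_avoids ha b1 /\ bexp_avoids ha b2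
  end.

Fixpoint avoids (ha : HPS) (p : prog) : Prop :=
  match p with
  | Skip => True
  | Init q | Apply _ q => hqu ha q = None
  | Measure q c => hqu ha q = None /\ htop ha c = None
  | Assign c1 _ c2 => htop ha c1 = None /\ htop ha c2 = None
  | Seq p1 p2 => avoids ha p1 /\ avoids ha p2
  | For lo hi body => forall i, (lo <= i < hi)%nat -> avoids ha (body i)
  | If b p1 p2 => bexp_avoids ha b /\ avoids ha p1 /\ avoids ha p2
  end.

Lemma avoids_For ha lo hi body :
  avoids ha (For lo hi body) -> avoids ha (unroll_for body (hi - lo) lo).
Proof.
  simpl. intros H.
  assert (H' : forall i, (lo <= i < lo + (hi - lo))%nat -> avoids ha (body i))
    by (intros; apply H; lia).
  clear H. revert H'. generalize (hi - lo)%nat as n. intros n. revert lo.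
  induction n; intros lo H; simpl; auto.
  split; [apply H; lia|]. apply IHn. intros. apply H. lia.
Qed.

Lemma avoids_ext ha ha' p : hqu ha = hqu ha' -> htop ha = htop ha' -> avoids ha p -> avoids ha' p.
Proof.
  intros Hq Ht. assert (Hb : forall b, bexp_avoids ha b -> bexp_avoids ha' b).
  { induction b; simpl; rewrite ?Hq, ?Ht; tauto. }
  induction p; simpl; rewrite ?Hq, ?Ht; firstorder.
Qed.

Lemma htop_nth X : htop X = nth (pred (length (hcl X))) (hcl X) emptymap.
Proof. apply last_nth. Qed.

Lemma regs_disjoint_htop X ha c : regs_disjoint X ha -> htop X c <> None -> htop ha c = None.
Proof.
  intros (_ & L & D) H. rewrite htop_nth, <- L. apply D. rewrite <- htop_nth. auto.
Qed.

Lemma uses_only_avoids X ha : regs_disjoint X ha -> forall P, uses_only X P -> avoids ha P.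
Proof.
  intros T. assert (Hb : forall b, bexp_in X b -> bexp_avoids ha b).
  { induction b; simpl; try tauto.
    - apply regs_disjoint_htop; auto.
    - apply T. }
  induction P; simpl; intuition; try (eapply regs_disjoint_htop; eauto; fail); apply T; auto.
Qed.

Definition pad_hps (ha : HPS) (n : nat) : HPS :=
  mkHPS (hsu ha) (hqu ha) (pad (hcl ha) n) (hP ha) (hs ha).

Lemma pad_hps_length ha : pad_hps ha (length (hcl ha)) = ha.
Proof. destruct ha. unfold pad_hps. simpl. rewrite pad_length. reflexivity. Qed.

Lemma pad_hps_pad_hps ha n1 n2 :
  (length (hcl ha) <= n1 <= n2)%nat -> pad_hps (pad_hps ha n1) n2 = pad_hps ha n2.
Proof. intros. unfold pad_hps. simpl. rewrite pad_pad; auto. Qed.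

Lemma htop_pad_hps ha n : htop (pad_hps ha n) = htop ha.
Proof. apply last_pad. Qed.

Lemma regs_disjoint_push X ha m : regs_disjoint X ha ->
  (forall c, m c <> None -> htop ha c = None) ->
  regs_disjoint (push_cl X m) (pad_hps ha (length (hcl (push_cl X m)))).
Proof.
  intros (T1 & T2 & T3) Hm. unfold pad_hps, pad. simpl. rewrite length_app, <- T2. simpl.
  replace (length (hcl X) + 1 - length (hcl X))%nat with 1%nat by lia.
  repeat split; simpl; auto.
  - rewrite !length_app. simpl. lia.
  - intros t c H. destruct (Nat.lt_ge_cases t (length (hcl X))).
    + rewrite app_nth1 in * by lia. auto.
    + rewrite app_nth2 in * by lia. rewrite <- T2.
      destruct (t - length (hcl X))%nat as [|[|k]]; simpl in *; [apply Hm; auto|reflexivity..].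
Qed.

Lemma nth_map_combine (F : amap -> amap -> amap) (l1 l2 : list amap) t :
  length l1 = length l2 -> (t < length l1)%nat ->
  nth t (map (fun mm => F (fst mm) (snd mm)) (combine l1 l2)) emptymap =
  F (nth t l1 emptymap) (nth t l2 emptymap).
Proof.
  revert l2 t. induction l1 as [|a l1 IH]; intros [|b l2] t H1 H2; simpl in *; try lia.
  destruct t; simpl; auto. apply IH; lia.
Qed.

Lemma nth_hcl_hplus X1 X2 t : (t < Nat.max (length (hcl X1)) (length (hcl X2)))%nat ->
  nth t (hcl (hplus X1 X2)) emptymap =
  mselect (fresh (hsu X1 ++ hsu X2))
    (nth (Nat.min t (pred (length (hcl X1)))) (hcl X1) emptymap)
    (nth (Nat.min t (pred (length (hcl X2)))) (hcl X2) emptymap).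
Proof.
  intros H. simpl. rewrite nth_map_combine, !nth_pad by (rewrite ?length_pad; lia). reflexivity.
Qed.

Lemma mselect_defined yf m1 m2 a : mselect yf m1 m2 a <> None -> m1 a <> None \/ m2 a <> None.
Proof.
  unfold mselect.
  destruct (m1 a), (m2 a); intros H; try (left; discriminate); try (right; discriminate).
  contradiction.
Qed.

Lemma regs_disjoint_hplus X1 X2 ha :
  regs_disjoint X1 (pad_hps ha (length (hcl X1))) ->
  regs_disjoint X2 (pad_hps ha (length (hcl X2))) ->
  (length (hcl ha) <= length (hcl X1))%nat -> (length (hcl ha) <= length (hcl X2))%nat ->
  regs_disjoint (hplus X1 X2) (pad_hps ha (length (hcl (hplus X1 X2)))).
Proof.
  intros (A1&A2&A3) (B1&B2&B3) L1 L2. rewrite length_hcl_hplus.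
  set (N := Nat.max (length (hcl X1)) (length (hcl X2))).
  repeat split.
  - intros q H. apply mselect_defined in H as [H|H]; [apply A1 in H|apply B1 in H]; auto.
  - simpl. rewrite length_map, length_combine, !length_pad by lia. lia.
  - intros t c H. destruct (Nat.lt_ge_cases t N) as [Ht|Ht].
    2:{ rewrite nth_overflow in H; [contradiction|]. rewrite length_hcl_hplus. lia. }
    rewrite nth_hcl_hplus in H by auto. simpl.
    apply mselect_defined in H as [H|H].
    + destruct (Nat.eq_dec (length (hcl X1)) 0).
      { rewrite nth_overflow in H; [contradiction|lia]. }
      apply A3 in H. simpl in H. rewrite nth_pad_min with (N := N) in H; auto; lia.
    + destruct (Nat.eq_dec (length (hcl X2)) 0).
      { rewrite nth_overflow in H; [contradiction|lia]. }
      apply B3 in H. simpl in H. rewrite nth_pad_min with (N := N) in H; auto; lia.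
Qed.

Lemma regs_disjoint_sem : forall P X ha, regs_disjoint X ha -> avoids ha P ->
  regs_disjoint (sem P X) (pad_hps ha (length (hcl (sem P X)))).
Proof.
  apply (prog_ind_unroll (fun P => forall X ha, regs_disjoint X ha -> avoids ha P ->
    regs_disjoint (sem P X) (pad_hps ha (length (hcl (sem P X)))))).
  - intros X ha T _. simpl. rewrite (proj1 (proj2 T)), pad_hps_length. auto.
  - intros q X ha (T1&T2&T3) R. simpl. rewrite T2, pad_hps_length.
    repeat split; auto. simpl. intros a. unfold mupd. destruct (Nat.eqb_spec a q); subst; auto.
  - intros g q X ha (T1&T2&T3) R.
    destruct g; simpl; rewrite T2, pad_hps_length; repeat split; auto; simpl;
      intros a; unfold mupd; destruct (Nat.eqb_spec a q); subst; auto.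
  - intros q c X ha T [Rq Rc]. apply regs_disjoint_push; auto.
    intros c' H. unfold mupd in H. destruct (Nat.eqb_spec c' c); subst; [tauto|].
    eapply regs_disjoint_htop; eauto.
  - intros c1 f c2 X ha T [Rc1 Rc2]. apply regs_disjoint_push; auto.
    intros c' H. unfold mupd in H. destruct (Nat.eqb_spec c' c1); subst; [tauto|].
    eapply regs_disjoint_htop; eauto.
  - intros p1 p2 IH1 IH2 X ha T [R1 R2]. cbn [sem].
    assert (R2' : avoids (pad_hps ha (length (hcl (sem p1 X)))) p2).
    { eapply avoids_ext; [| |exact R2]; auto. rewrite htop_pad_hps. auto. }
    specialize (IH2 _ _ (IH1 X ha T R1) R2').
    rewrite pad_hps_pad_hps in IH2; auto.
    rewrite <- (proj1 (proj2 T)). split; apply length_hcl_sem.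
  - intros b p1 p2 IH1 IH2 X ha T (Rb & R1 & R2). cbn [sem].
    apply regs_disjoint_hplus; auto;
      rewrite <- (proj1 (proj2 T)); apply (length_hcl_sem _ (scale _ X)).
  - intros lo hi body IH X ha T R. rewrite sem_For. apply IH, avoids_For; auto.
Qed.

(** * Renamed tensor products *)

Definition renamed_union (r : nat -> nat) (sX sa : list amap) : list amap :=
  map (rename_map r) (map (fun mm => munion (fst mm) (snd mm)) (combine sX sa)).

Definition renamed_tensor (Y X ha : HPS) (r : nat -> nat) : Prop :=
  (forall j, In j (hsu Y) <-> In j (map r (hsu X ++ hsu ha))) /\
  hqu Y = rename_map r (munion (hqu X) (hqu ha)) /\
  hcl Y = renamed_union r (hcl X) (hcl ha) /\
  hP Y = (fun e => hP X (rename_env r e) + hP ha (rename_env r e)) /\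
  hs Y = (fun e => hs X (rename_env r e) * hs ha (rename_env r e)).

Lemma map_eq_iff m1 m2 : map_eq m1 m2 <-> m1 = m2.
Proof.
  split.
  - intros H. extensionality a. specialize (H a).
    destruct (m1 a), (m2 a); try contradiction; auto.
    f_equal. extensionality e. auto.
  - intros <- a. destruct (m1 a); auto.
Qed.

Lemma renamed_tensor_iff Y X ha r :
  renamed_tensor Y X ha r <-> hps_eq Y (rename r (tensor X ha)).
Proof.
  unfold renamed_tensor, hps_eq. simpl. rewrite map_app.
  split.
  - intros (H1 & H2 & H3 & H4 & H5). rewrite H2, H3, H4, H5.
    repeat split; intros; rewrite ?map_eq_iff; auto; apply H1; auto.
  - intros (H1 & H2 & H3 & H4 & H5 & H6). repeat split; intros; try apply H1; auto.
    + apply map_eq_iff; auto.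
    + apply nth_ext with (d := emptymap) (d' := emptymap); auto.
      intros. apply map_eq_iff; auto.
    + extensionality e; auto.
    + extensionality e; auto.
Qed.

Lemma length_renamed_union r sX sa :
  length sX = length sa -> length (renamed_union r sX sa) = length sX.
Proof. intros. unfold renamed_union. rewrite !length_map, length_combine. lia. Qed.

Lemma nth_renamed_union r sX sa t : length sX = length sa ->
  nth t (renamed_union r sX sa) emptymap =
  rename_map r (munion (nth t sX emptymap) (nth t sa emptymap)).
Proof.
  unfold renamed_union. revert sa t.
  induction sX as [|a sX IH]; intros [|b sa] [|t] H; simpl in *; try lia; auto.
Qed.

Lemma renamed_union_push r sX sa m : length sX = length sa ->
  renamed_union r (sX ++ [m]) (pad sa (length (sX ++ [m]))) =
  renamed_union r sX sa ++ [rename_map r (munion m (last sa emptymap))].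
Proof.
  intros H. unfold pad. rewrite length_app. simpl. rewrite <- H.
  replace (length sX + 1 - length sX)%nat with 1%nat by lia. simpl.
  generalize (last sa emptymap). intros x.
  unfold renamed_union. revert sa H.
  induction sX as [|a sX IH]; intros [|b sa] H; simpl in *; try lia; auto.
  f_equal. apply IH. lia.
Qed.

Lemma mget_rename_map r m a e : mget (rename_map r m) a e = mget m a (rename_env r e).
Proof. unfold mget, rename_map. destruct (m a); auto. Qed.

Lemma munion_none_r m1 m2 a : m2 a = None -> munion m1 m2 a = m1 a.
Proof. unfold munion. destruct (m1 a); auto. Qed.

Lemma rename_map_munion r A B :
  rename_map r (munion A B) = munion (rename_map r A) (rename_map r B).
Proof. extensionality a. unfold rename_map, munion. destruct (A a); auto. Qed.

Lemma rename_map_none r m c : rename_map r m c = None <-> m c = None.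
Proof. unfold rename_map. destruct (m c); split; congruence. Qed.

Lemma htop_renamed_tensor Y X ha r : renamed_tensor Y X ha r -> length (hcl X) = length (hcl ha) ->
  htop Y = rename_map r (munion (htop X) (htop ha)).
Proof.
  intros (_ & _ & Hc & _) L. unfold htop. rewrite Hc, !last_nth, length_renamed_union by auto.
  rewrite nth_renamed_union, L by auto. reflexivity.
Qed.

Section RegisterContents.

Variables (Y X ha : HPS) (r : nat -> nat).
Hypothesis Hq : hqu Y = rename_map r (munion (hqu X) (hqu ha)).
Hypothesis Ht : htop Y = rename_map r (munion (htop X) (htop ha)).

Lemma curq_renamed q : hqu ha q = None -> curq Y q = fun e => curq X q (rename_env r e).
Proof.
  intros Hn. extensionality e. unfold curq. rewrite Hq, mget_rename_map.
  unfold mget. rewrite munion_none_r; auto.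
Qed.

Lemma curc_renamed c : htop ha c = None -> curc Y c = fun e => curc X c (rename_env r e).
Proof.
  intros Hn. extensionality e. unfold curc. rewrite Ht, mget_rename_map.
  unfold mget. rewrite munion_none_r; auto.
Qed.

Lemma eval_bexp_renamed b : bexp_avoids ha b ->
  eval_bexp Y b = fun e => eval_bexp X b (rename_env r e).
Proof.
  induction b; simpl; intros Hb.
  - reflexivity.
  - apply curc_renamed; auto.
  - apply curq_renamed; auto.
  - rewrite IHb; auto.
  - destruct Hb. rewrite IHb1, IHb2; auto.
  - destruct Hb. rewrite IHb1, IHb2; auto.
Qed.

End RegisterContents.

Lemma mselect_renamed yf yfX r (A B C : amap) :
  (forall a, A a <> None -> C a = None) -> (forall a, B a <> None -> C a = None) -> r yfX = yf ->
  mselect yf (rename_map r (munion A C)) (rename_map r (munion B C)) =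
  rename_map r (munion (mselect yfX A B) C).
Proof.
  intros HA HB Hy. extensionality a. unfold mselect, rename_map, munion, mget.
  destruct (A a) eqn:EA, (B a) eqn:EB, (C a) eqn:EC; auto;
    try (exfalso; assert (X1 : A a <> None) by congruence; apply HA in X1; congruence);
    try (exfalso; assert (X1 : B a <> None) by congruence; apply HB in X1; congruence);
    f_equal; extensionality e; simpl; subst; try reflexivity. destruct (epath e _); auto.
Qed.

Lemma rprod_forallb l e : rprod l e = if forallb (fun y => epath e y) l then 1 else 0.
Proof.
  induction l; simpl; auto. unfold rprod in *. simpl. rewrite IHl. unfold b2R.
  destruct (epath e a), (forallb _ l); simpl; ring.
Qed.

Lemma rprod_rename r l e : rprod l (rename_env r e) = rprod (map r l) e.
Proof. unfold rprod. rewrite map_map. reflexivity. Qed.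

Lemma rprod_same_set l1 l2 : (forall j, In j l1 <-> In j l2) -> rprod l1 = rprod l2.
Proof.
  intros H. extensionality e. rewrite !rprod_forallb.
  destruct (forallb _ l1) eqn:E1, (forallb _ l2) eqn:E2; auto; exfalso;
    rewrite forallb_forall in *; rewrite <- not_true_iff_false, forallb_forall in *;
    [apply E2|apply E1]; intros x Hx; [apply E1, H|apply E2, H]; auto.
Qed.

(** * Running a program next to an ancilla *)

Lemma rename_munion_mupd r m C q (p : bpoly) :
  rename_map r (munion (mupd m q p) C) =
  mupd (rename_map r (munion m C)) q (fun e => p (rename_env r e)).
Proof.
  extensionality a. unfold mupd, rename_map, munion. destruct (Nat.eqb a q); auto.
Qed.

(* [sem] names each new path variable [fresh], i.e. just above the current maximum, so the
   new variables of two runs correspond through their offset above the respective maxima. *)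
Definition shifts_new_vars (r : nat -> nat) (X Y Z : HPS) : Prop :=
  forall j, In j (hsu Z) -> ~ In j (hsu X) ->
  r j = (j - list_max (hsu X) + list_max (hsu Y))%nat.

Lemma shifts_new_vars_above r X Y Z k : shifts_new_vars r X Y Z ->
  In k (hsu Z) -> (list_max (hsu X) < k)%nat ->
  r k = (k - list_max (hsu X) + list_max (hsu Y))%nat.
Proof. intros N Hk Hlt. apply N; auto. intros Hi. apply le_list_max in Hi. lia. Qed.

Section SemRenamedTensor.

Variable r : nat -> nat.
Hypothesis r_inj : forall a b, r a = r b -> a = b.

Lemma renamed_tensor_support P Y X ha :
  (forall j, In j (hsu Y) <-> In j (map r (hsu X ++ hsu ha))) ->
  shifts_new_vars r X Y (sem P X) ->
  forall j, In j (hsu (sem P Y)) <-> In j (map r (hsu (sem P X) ++ hsu ha)).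
Proof.
  intros H N j. rewrite in_hsu_sem, in_map_iff. split.
  - intros [Hj|Hj].
    + apply H, in_map_iff in Hj. destruct Hj as (x & <- & Hx).
      exists x. split; auto. rewrite in_app_iff in *. destruct Hx as [Hx|Hx]; auto.
      left. apply in_hsu_sem. auto.
    + set (k := (j - list_max (hsu Y) + list_max (hsu X))%nat).
      assert (Hk : In k (hsu (sem P X))) by (apply in_hsu_sem; right; lia).
      exists k. split; [rewrite (shifts_new_vars_above _ _ _ _ _ N Hk); lia|].
      apply in_app_iff; auto.
  - intros (x & <- & Hx). apply in_app_iff in Hx as [Hx|Hx].
    + destruct (in_dec Nat.eq_dec x (hsu X)) as [Hi|Hi].
      * left. apply H, in_map, in_app_iff. auto.
      * rewrite N by auto. apply in_hsu_sem in Hx as [Hx|Hx]; [contradiction|]. right. lia.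
    + left. apply H, in_map, in_app_iff. auto.
Qed.

Lemma in_lminus_renamed (A1 A2 B1 B2 H : list nat) :
  (forall j, In j A1 <-> In j (map r (B1 ++ H))) ->
  (forall j, In j A2 <-> In j (map r (B2 ++ H))) ->
  (forall x, In x H -> In x B2 -> In x B1) ->
  forall j, In j (lminus A2 A1) <-> In j (map r (lminus B2 B1)).
Proof.
  intros H1 H2 HH j. rewrite In_lminus, H1, H2, !in_map_iff. split.
  - intros [(x & <- & Hx) Hn]. exists x. split; auto. apply In_lminus.
    apply in_app_iff in Hx as [Hx|Hx].
    + split; auto. intros Hx1. apply Hn. exists x. split; auto. apply in_app_iff; auto.
    + exfalso. apply Hn. exists x. split; auto. apply in_app_iff; auto.
  - intros (x & <- & Hx). apply In_lminus in Hx as [Hx2 Hx1]. split.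
    + exists x. split; auto. apply in_app_iff; auto.
    + intros (x' & E & Hx'). apply r_inj in E. subst x'.
      apply in_app_iff in Hx' as [Hx'|Hx']; auto.
Qed.

Lemma renamed_tensor_set_qu Y X ha mX :
  renamed_tensor Y X ha r ->
  renamed_tensor (set_qu Y (rename_map r (munion mX (hqu ha)))) (set_qu X mX) ha r.
Proof. intros (Hsu & _ & Hc & HP & Hs). repeat split; auto; apply Hsu. Qed.

Lemma renamed_tensor_mupd_qu Y X ha q (p : bpoly) : renamed_tensor Y X ha r ->
  renamed_tensor (set_qu Y (mupd (hqu Y) q (fun e => p (rename_env r e))))
    (set_qu X (mupd (hqu X) q p)) ha r.
Proof.
  intros H. rewrite (proj1 (proj2 H)), <- rename_munion_mupd. apply renamed_tensor_set_qu; auto.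
Qed.

Lemma renamed_tensor_push_mupd Y X ha c (p : bpoly) :
  renamed_tensor Y X ha r -> length (hcl X) = length (hcl ha) ->
  renamed_tensor (push_cl Y (mupd (htop Y) c (fun e => p (rename_env r e))))
    (push_cl X (mupd (htop X) c p))
    (pad_hps ha (length (hcl (push_cl X (mupd (htop X) c p))))) r.
Proof.
  intros H L. rewrite (htop_renamed_tensor _ _ _ _ H L), <- rename_munion_mupd.
  destruct H as (Hsu & Hq & Hc & HP & Hs). repeat split; auto; try apply Hsu.
  simpl. rewrite Hc. symmetry. apply renamed_union_push; auto.
Qed.

Lemma renamed_tensor_hadamard Y X ha q :
  renamed_tensor Y X ha r -> hqu ha q = None -> r (fresh (hsu X)) = fresh (hsu Y) ->
  (forall j, In j (hsu (sem_gate GH q Y)) <-> In j (map r (hsu (sem_gate GH q X) ++ hsu ha))) ->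
  renamed_tensor (sem_gate GH q Y) (sem_gate GH q X) ha r.
Proof.
  intros H Hn Hy Hsu. assert (Cq := curq_renamed _ _ _ _ (proj1 (proj2 H)) q Hn).
  destruct H as (_ & Hq & Hc & HP & Hs). repeat split; try apply Hsu; simpl.
  - rewrite Hq, rename_munion_mupd. simpl. rewrite Hy. reflexivity.
  - exact Hc.
  - rewrite HP, Cq. extensionality e. simpl. rewrite Hy. lra.
  - rewrite Hs. extensionality e. lra.
Qed.

Lemma renamed_tensor_scale Y X ha (g : bpoly) : renamed_tensor Y X ha r ->
  renamed_tensor (scale (fun e => g (rename_env r e)) Y) (scale g X) ha r.
Proof.
  intros (Hsu & Hq & Hc & HP & Hs). repeat split; try apply Hsu; auto.
  simpl. rewrite Hs. extensionality e. ring.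
Qed.

Lemma renamed_tensor_hplus Y1 Y2 X1 X2 ha :
  renamed_tensor Y1 X1 (pad_hps ha (length (hcl X1))) r ->
  renamed_tensor Y2 X2 (pad_hps ha (length (hcl X2))) r ->
  regs_disjoint X1 (pad_hps ha (length (hcl X1))) ->
  regs_disjoint X2 (pad_hps ha (length (hcl X2))) ->
  (length (hcl ha) <= length (hcl X1))%nat -> (length (hcl ha) <= length (hcl X2))%nat ->
  (forall x, In x (hsu ha) -> In x (hsu X2) -> In x (hsu X1)) ->
  (forall x, In x (hsu ha) -> In x (hsu X1) -> In x (hsu X2)) ->
  r (fresh (hsu X1 ++ hsu X2)) = fresh (hsu Y1 ++ hsu Y2) ->
  renamed_tensor (hplus Y1 Y2) (hplus X1 X2) (pad_hps ha (length (hcl (hplus X1 X2)))) r.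
Proof.
  intros (S1&Q1&C1&P1&SS1) (S2&Q2&C2&P2&SS2) (A1&A2&A3) (B1&B2&B3) L1 L2 HX21 HX12 Hy.
  simpl in S1, S2, Q1, Q2, C1, C2, P1, P2, SS1, SS2, A1, A2, A3, B1, B2, B3.
  rewrite length_pad in A2, B2 by lia.
  set (N := Nat.max (length (hcl X1)) (length (hcl X2))).
  assert (LY1 : length (hcl Y1) = length (hcl X1)).
  { rewrite C1. apply length_renamed_union. rewrite length_pad; lia. }
  assert (LY2 : length (hcl Y2) = length (hcl X2)).
  { rewrite C2. apply length_renamed_union. rewrite length_pad; lia. }
  assert (LM21 := in_lminus_renamed _ _ _ _ _ S1 S2 HX21).
  assert (LM12 := in_lminus_renamed _ _ _ _ _ S2 S1 HX12).
  repeat split.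
  - intros Hj. simpl hsu in Hj |- *. rewrite !in_app_iff, LM21, S1 in Hj.
    rewrite !map_app, !in_app_iff in *. simpl in *. rewrite Hy. tauto.
  - intros Hj. simpl hsu in Hj |- *. rewrite !in_app_iff, LM21, S1.
    rewrite !map_app, !in_app_iff in *. simpl in *. rewrite Hy in Hj. tauto.
  - simpl hqu. rewrite Q1, Q2. apply mselect_renamed; auto.
  - change (hcl (hplus Y1 Y2) =
            renamed_union r (hcl (hplus X1 X2)) (pad (hcl ha) (length (hcl (hplus X1 X2))))).
    rewrite length_hcl_hplus. fold N.
    apply nth_ext with (d := emptymap) (d' := emptymap).
    + rewrite length_hcl_hplus, length_renamed_union, length_hcl_hplus; [lia|].
      rewrite length_hcl_hplus, length_pad; lia.
    + intros t Ht. rewrite length_hcl_hplus in Ht.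
      rewrite nth_hcl_hplus, nth_renamed_union, nth_hcl_hplus, LY1, LY2, C1, C2
        by (rewrite ?length_hcl_hplus, ?length_pad; lia).
      rewrite !nth_renamed_union, !(nth_pad_min (hcl ha) _ N t) by (rewrite ?length_pad; lia).
      apply mselect_renamed; auto; intros a Ha.
      * apply A3 in Ha. rewrite nth_pad_min with (N := N) in Ha by lia. auto.
      * apply B3 in Ha. rewrite nth_pad_min with (N := N) in Ha by lia. auto.
  - simpl hP. rewrite P1, P2. extensionality e. simpl. rewrite Hy. destruct (epath e _); ring.
  - simpl hs. rewrite SS1, SS2. extensionality e. simpl. rewrite Hy.
    rewrite (rprod_same_set _ _ LM21), (rprod_same_set _ _ LM12), !rprod_rename.
    destruct (epath e _); ring.
Qed.

Definition ancilla_commutes (P : prog) : Prop :=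
  forall Y X ha, regs_disjoint X ha -> avoids ha P ->
  (forall j, In j (hsu ha) -> In j (hsu (sem P X)) -> In j (hsu X)) ->
  shifts_new_vars r X Y (sem P X) -> renamed_tensor Y X ha r ->
  renamed_tensor (sem P Y) (sem P X) (pad_hps ha (length (hcl (sem P X)))) r.

Lemma ancilla_commutes_Skip : ancilla_commutes Skip.
Proof. intros Y X ha T _ _ _ H. simpl. rewrite (proj1 (proj2 T)), pad_hps_length. auto. Qed.

Lemma ancilla_commutes_Init q : ancilla_commutes (Init q).
Proof.
  intros Y X ha T _ _ _ H. cbn [sem].
  change (length (hcl (set_qu X _))) with (length (hcl X)).
  rewrite (proj1 (proj2 T)), pad_hps_length.
  apply (renamed_tensor_mupd_qu Y X ha q (fun _ => false)); auto.
Qed.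

Lemma ancilla_commutes_Apply g q : ancilla_commutes (Apply g q).
Proof.
  intros Y X ha T R _ N H. cbn [sem].
  assert (Cq := curq_renamed _ _ _ _ (proj1 (proj2 H)) q R).
  destruct g; change (length (hcl (sem_gate _ q X))) with (length (hcl X));
    rewrite (proj1 (proj2 T)), pad_hps_length.
  - apply renamed_tensor_hadamard; auto.
    + rewrite (shifts_new_vars_above _ _ _ _ _ N); rewrite ?fresh_list_max; [lia| |lia].
      simpl. apply in_app_iff. simpl. auto.
    + apply (renamed_tensor_support (Apply GH q)); auto. apply H.
  - cbn [sem_gate]. rewrite Cq.
    apply (renamed_tensor_mupd_qu Y X ha q (fun e => negb (curq X q e))); auto.
  - destruct H as (Hsu & Hq & Hc & HP & Hs). simpl. rewrite Cq, HP.
    repeat split; auto; try apply Hsu. extensionality e. simpl. lra.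
Qed.

Lemma ancilla_commutes_Measure q c : ancilla_commutes (Measure q c).
Proof.
  intros Y X ha T [Rq _] _ _ H. cbn [sem].
  rewrite (curq_renamed _ _ _ _ (proj1 (proj2 H)) q Rq).
  apply (renamed_tensor_push_mupd Y X ha c (curq X q)); auto. apply T.
Qed.

Lemma ancilla_commutes_Assign c1 f c2 : ancilla_commutes (Assign c1 f c2).
Proof.
  intros Y X ha T [_ Rc2] _ _ H. cbn [sem].
  rewrite (curc_renamed _ _ _ _ (htop_renamed_tensor _ _ _ _ H (proj1 (proj2 T))) c2 Rc2).
  apply (renamed_tensor_push_mupd Y X ha c1 (fun e => f (curc X c2 e))); auto. apply T.
Qed.

Lemma ancilla_commutes_Seq p1 p2 :
  ancilla_commutes p1 -> ancilla_commutes p2 -> ancilla_commutes (Seq p1 p2).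
Proof.
  intros IH1 IH2 Y X ha T [R1 R2] D N H. cbn [sem] in *.
  assert (H1 : renamed_tensor (sem p1 Y) (sem p1 X) (pad_hps ha (length (hcl (sem p1 X)))) r).
  { apply IH1; auto.
    - intros j Hj Hj'. apply D; auto. apply in_hsu_sem. auto.
    - intros j Hj Hn. apply N; auto. apply in_hsu_sem. auto. }
  assert (R2' : avoids (pad_hps ha (length (hcl (sem p1 X)))) p2).
  { eapply avoids_ext; [| |exact R2]; auto. rewrite htop_pad_hps. auto. }
  assert (L : (length (hcl ha) <= length (hcl (sem p1 X))
               <= length (hcl (sem p2 (sem p1 X))))%nat).
  { rewrite <- (proj1 (proj2 T)). split; apply length_hcl_sem. }
  rewrite <- (pad_hps_pad_hps ha _ _ L).
  apply IH2; auto.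
  - apply regs_disjoint_sem; auto.
  - intros j Hj Hj'. apply in_hsu_sem. left. apply D; auto.
  - intros j Hj Hn. rewrite N, !list_max_hsu_sem; auto.
    + apply in_hsu_sem in Hj as [Hj|Hj]; [contradiction|]. rewrite list_max_hsu_sem in Hj. lia.
    + intros Hi. apply Hn, in_hsu_sem. auto.
Qed.

Lemma ancilla_commutes_If b p1 p2 :
  ancilla_commutes p1 -> ancilla_commutes p2 -> ancilla_commutes (If b p1 p2).
Proof.
  intros IH1 IH2 Y X ha T (Rb & R1 & R2) D N H. cbn [sem] in *.
  rewrite (eval_bexp_renamed _ _ _ _ (proj1 (proj2 H))
             (htop_renamed_tensor _ _ _ _ H (proj1 (proj2 T))) b Rb).
  set (g := eval_bexp X b) in *.
  set (X1 := sem p1 (scale g X)) in *. set (X2 := sem p2 (scale (fun e => negb (g e)) X)) in *.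
  assert (L1 := length_hcl_sem p1 (scale g X)).
  assert (L2 := length_hcl_sem p2 (scale (fun e => negb (g e)) X)).
  fold X1 in L1. fold X2 in L2. simpl in L1, L2. rewrite (proj1 (proj2 T)) in L1, L2.
  assert (M1 := list_max_hsu_sem p1 (scale g X)).
  assert (M2 := list_max_hsu_sem p2 (scale (fun e => negb (g e)) X)).
  assert (M1' := list_max_hsu_sem p1 (scale (fun e => g (rename_env r e)) Y)).
  assert (M2' := list_max_hsu_sem p2 (scale (fun e => negb (g (rename_env r e))) Y)).
  fold X1 in M1. fold X2 in M2. simpl in M1, M2, M1', M2'.
  apply renamed_tensor_hplus; auto.
  - apply IH1; [exact T | exact R1 | | | exact (renamed_tensor_scale Y X ha g H)].
    + intros j Hj Hj'. apply D; auto. apply in_hsu_hplus_l. auto.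
    + intros j Hj Hn. apply N; auto. apply in_hsu_hplus_l. auto.
  - apply IH2;
      [exact T | exact R2 | | | exact (renamed_tensor_scale Y X ha (fun e => negb (g e)) H)].
    + intros j Hj Hj'. apply D; auto. apply in_hsu_hplus_r. auto.
    + intros j Hj Hn. apply N; auto. apply in_hsu_hplus_r. auto.
  - apply regs_disjoint_sem; auto.
  - apply regs_disjoint_sem; auto.
  - intros x Hx Hx2. apply in_hsu_sem. left. apply D; auto. apply in_hsu_hplus_r. auto.
  - intros x Hx Hx1. apply in_hsu_sem. left. apply D; auto. apply in_hsu_hplus_l. auto.
  - rewrite (shifts_new_vars_above _ _ _ _ _ N (in_hsu_hplus_fresh _ _));
      rewrite !fresh_list_max, !list_max_app; fold X1 X2; lia.
Qed.

Lemma ancilla_commutes_For lo hi body :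
  ancilla_commutes (unroll_for body (hi - lo) lo) -> ancilla_commutes (For lo hi body).
Proof.
  intros IH Y X ha T R. rewrite sem_For. apply IH; auto. apply avoids_For; auto.
Qed.

Lemma sem_renamed_tensor P : ancilla_commutes P.
Proof.
  induction P using prog_ind_unroll; auto using ancilla_commutes_Skip, ancilla_commutes_Init,
    ancilla_commutes_Apply, ancilla_commutes_Measure, ancilla_commutes_Assign,
    ancilla_commutes_Seq, ancilla_commutes_If, ancilla_commutes_For.
Qed.

End SemRenamedTensor.

(** * Dependence on path variables *)

Definition path_dep {T : Type} (l : list nat) (f : env -> T) : Prop :=
  forall e1 e2, (forall i, ein e1 i = ein e2 i) ->
  (forall j, In j l -> epath e1 j = epath e2 j) -> f e1 = f e2.

Definition support_closed (Z : HPS) : Prop :=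
  (forall q p, hqu Z q = Some p -> path_dep (hsu Z) p) /\
  (forall m, In m (hcl Z) -> forall c p, m c = Some p -> path_dep (hsu Z) p) /\
  path_dep (hsu Z) (hP Z) /\ path_dep (hsu Z) (hs Z).

Lemma wf_support_closed Z : wf_hps Z -> support_closed Z.
Proof.
  intros (_ & _ & _ & I & H1 & H2 & H3 & H4 & _).
  repeat split; intros; intros e1 e2 E1 E2; eauto.
  - eapply H1; eauto.
  - eapply H2; eauto.
Qed.

Lemma path_dep_incl {T : Type} l l' (f : env -> T) :
  path_dep l f -> (forall j, In j l -> In j l') -> path_dep l' f.
Proof. intros H Hi e1 e2 E1 E2. apply H; auto. Qed.

Lemma path_dep_rename {T : Type} l (f : env -> T) r1 r2 : path_dep l f ->
  (forall j, In j l -> r1 j = r2 j) -> forall e, f (rename_env r1 e) = f (rename_env r2 e).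
Proof. intros H Hr e. apply H; simpl; auto. Qed.

Lemma path_dep_rename_id {T : Type} l (f : env -> T) r : path_dep l f ->
  (forall j, In j l -> r j = j) -> forall e, f (rename_env r e) = f e.
Proof. intros H Hr e. apply H; simpl; auto. Qed.

Lemma rename_map_ext m l r1 r2 : (forall c p, m c = Some p -> path_dep l p) ->
  (forall j, In j l -> r1 j = r2 j) -> rename_map r1 m = rename_map r2 m.
Proof.
  intros H Hr. extensionality a. unfold rename_map. destruct (m a) eqn:E; auto.
  f_equal. extensionality e. eapply path_dep_rename; eauto.
Qed.

Lemma rename_map_id m l r : (forall c p, m c = Some p -> path_dep l p) ->
  (forall j, In j l -> r j = j) -> rename_map r m = m.
Proof.
  intros H Hr. extensionality a. unfold rename_map. destruct (m a) eqn:E; auto.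
  f_equal. extensionality e. eapply path_dep_rename_id; eauto.
Qed.

Lemma munion_path_dep m1 m2 l1 l2 :
  (forall c p, m1 c = Some p -> path_dep l1 p) -> (forall c p, m2 c = Some p -> path_dep l2 p) ->
  forall c p, munion m1 m2 c = Some p -> path_dep (l1 ++ l2) p.
Proof.
  intros H1 H2 c p. unfold munion. destruct (m1 c) eqn:E; [intros [=<-]|intros E2];
    eapply path_dep_incl; eauto; intros; apply in_app_iff; auto.
Qed.

Lemma renamed_union_ext r1 r2 sX sa lX la :
  (forall m, In m sX -> forall c p, m c = Some p -> path_dep lX p) ->
  (forall m, In m sa -> forall c p, m c = Some p -> path_dep la p) ->
  (forall j, In j (lX ++ la) -> r1 j = r2 j) -> renamed_union r1 sX sa = renamed_union r2 sX sa.
Proof.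
  intros H1 H2 Hr. unfold renamed_union. revert sa H2.
  induction sX as [|a sX IH]; intros [|b sa] H2; simpl; auto. f_equal.
  - eapply rename_map_ext; [|exact Hr]. apply munion_path_dep; [apply H1|apply H2]; simpl; auto.
  - apply IH; intros m Hm; [apply H1|apply H2]; simpl; auto.
Qed.

Lemma renamed_tensor_ext Y X ha r1 r2 : support_closed X -> support_closed ha ->
  (forall j, In j (hsu X ++ hsu ha) -> r1 j = r2 j) ->
  renamed_tensor Y X ha r1 -> renamed_tensor Y X ha r2.
Proof.
  intros (X1&X2&X3&X4) (A1&A2&A3&A4) Hr (Hsu&Hq&Hc&HP&Hs).
  assert (Hm : map r1 (hsu X ++ hsu ha) = map r2 (hsu X ++ hsu ha)) by (apply map_ext_in; auto).
  repeat split.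
  - intros Hj. rewrite <- Hm. apply Hsu, Hj.
  - intros Hj. apply Hsu. rewrite Hm. exact Hj.
  - rewrite Hq. eapply rename_map_ext; [|exact Hr]. apply munion_path_dep; auto.
  - rewrite Hc. eapply renamed_union_ext; eauto.
  - rewrite HP. extensionality e.
    f_equal; eapply path_dep_rename; eauto; intros; apply Hr, in_app_iff; auto.
  - rewrite Hs. extensionality e.
    f_equal; eapply path_dep_rename; eauto; intros; apply Hr, in_app_iff; auto.
Qed.

(* Swaps each [x ∈ l] with [x + K]. *)
Definition shift_above (K : nat) (l : list nat) (x : nat) : nat :=
  (if Nat.ltb x K then (if in_dec Nat.eq_dec x l then x + K else x)
   else (if in_dec Nat.eq_dec (x - K)%nat l then x - K else x))%nat.

Section ShiftAbove.

Variables (K : nat) (l : list nat).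
Hypothesis l_below : forall j, In j l -> (j < K)%nat.

Lemma shift_above_invol x : shift_above K l (shift_above K l x) = x.
Proof.
  unfold shift_above.
  destruct (Nat.ltb_spec x K), (in_dec Nat.eq_dec x l), (in_dec Nat.eq_dec (x - K)%nat l);
    try (assert (x - K < K)%nat by auto);
    repeat match goal with
    | |- context [Nat.ltb ?u ?v] => destruct (Nat.ltb_spec u v)
    | |- context [in_dec Nat.eq_dec ?u l] => destruct (in_dec Nat.eq_dec u l)
    end; try lia;
    try (replace (x + K - K)%nat with x in * by lia; contradiction).
Qed.

Lemma shift_above_in x : In x l -> shift_above K l x = (x + K)%nat.
Proof.
  intros H. assert (x < K)%nat by auto. unfold shift_above.
  destruct (Nat.ltb_spec x K); [|lia]. destruct (in_dec Nat.eq_dec x l); [auto|contradiction].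
Qed.

Lemma shift_above_out x : (x < K)%nat -> ~ In x l -> shift_above K l x = x.
Proof.
  intros H1 H2. unfold shift_above.
  destruct (Nat.ltb_spec x K); [|lia]. destruct (in_dec Nat.eq_dec x l); [contradiction|auto].
Qed.

Lemma in_map_shift_above j : In j (map (shift_above K l) l) -> (K <= j)%nat.
Proof. intros H. apply in_map_iff in H as (x & <- & Hx). rewrite shift_above_in; auto. lia. Qed.

End ShiftAbove.

Lemma renamed_tensor_rename_ancilla Y X ha r s :
  support_closed X -> (forall j, s (s j) = j) -> (forall j, In j (hsu X) -> s j = j) ->
  renamed_tensor Y X ha r -> renamed_tensor Y X (rename s ha) (fun j => r (s j)).
Proof.
  intros (X1&X2&X3&X4) Hss HsX (Hsu&Hq&Hc&HP&Hs).
  assert (Hm : forall m, rename_map r m = rename_map (fun j => r (s j)) (rename_map s m)).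
  { intros m. extensionality a. unfold rename_map. destruct (m a); auto. f_equal.
    extensionality e. unfold rename_env. simpl. do 3 f_equal. extensionality j. rewrite Hss. auto. }
  assert (HmX : forall m, (forall c p, m c = Some p -> path_dep (hsu X) p) ->
                 rename_map r m = rename_map (fun j => r (s j)) m).
  { intros m H. eapply rename_map_ext; eauto. intros j Hj. rewrite HsX; auto. }
  assert (Hsupp : map (fun j => r (s j)) (hsu X ++ hsu (rename s ha)) = map r (hsu X ++ hsu ha)).
  { simpl. rewrite !map_app, map_map. f_equal.
    - apply map_ext_in. intros; rewrite HsX; auto.
    - apply map_ext. intros; rewrite Hss; auto. }
  assert (Hss_env : forall e, rename_env s (rename_env (fun j => r (s j)) e) = rename_env r e).
  { intros e. unfold rename_env. simpl. f_equal. extensionality j. rewrite Hss. auto. }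
  repeat split.
  - rewrite Hsupp. apply Hsu.
  - rewrite Hsupp. apply Hsu.
  - rewrite Hq. simpl. rewrite !rename_map_munion. f_equal; auto.
  - rewrite Hc. simpl. unfold renamed_union. clear Hc Hq Hsu Hsupp.
    revert X2. generalize (hcl ha). induction (hcl X) as [|x sX IH]; intros [|b sa] X2; auto.
    simpl. f_equal.
    + rewrite !rename_map_munion. f_equal; auto. apply HmX. intros c p E. eapply X2; simpl; eauto.
    + apply IH. intros m Hm'. apply X2. simpl. auto.
  - rewrite HP. extensionality e. simpl. rewrite Hss_env. f_equal.
    eapply path_dep_rename; eauto. intros; rewrite HsX; auto.
  - rewrite Hs. extensionality e. simpl. rewrite Hss_env. f_equal.
    eapply path_dep_rename; eauto. intros; rewrite HsX; auto.
Qed.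

(** * Norm, well-formedness and input-freeness under renaming and padding *)

Definition norm2_sum (A : list (nat -> bool)) (H : (nat -> bool) -> list (nat -> option bool))
  (Kt : (nat -> bool) -> (nat -> option bool)) (S Pf : (nat -> bool) -> R) : R :=
  rsum (cdedup (map H A)) (fun eta =>
  rsum (cdedup (map Kt A)) (fun k =>
    let sel := fun y => ceqb (H y) eta && ceqb (Kt y) k in
    let re := rsum A (fun y => if sel y then S y * cos (2 * PI * Pf y) else 0) in
    let im := rsum A (fun y => if sel y then S y * sin (2 * PI * Pf y) else 0) in
    re * re + im * im)).

Lemma hps_norm2_sum h x : hps_norm2 h x =
  norm2_sum (assigns (hsu h)) (fun y => hist_at h (Env x y)) (fun y => ket_at h (Env x y))
    (fun y => hs h (Env x y)) (fun y => hP h (Env x y)).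
Proof. reflexivity. Qed.

Lemma rsum_map {T U : Type} (f : T -> U) l g : rsum (map f l) g = rsum l (fun x => g (f x)).
Proof. unfold rsum. rewrite map_map. auto. Qed.

Lemma rsum_ext {T : Type} (l : list T) g1 g2 : (forall x, g1 x = g2 x) -> rsum l g1 = rsum l g2.
Proof. intros H. unfold rsum. f_equal. apply map_ext. auto. Qed.

Lemma norm2_sum_map f A H Kt S Pf : norm2_sum (map f A) H Kt S Pf =
  norm2_sum A (fun y => H (f y)) (fun y => Kt (f y)) (fun y => S (f y)) (fun y => Pf (f y)).
Proof.
  unfold norm2_sum. rewrite !map_map. apply rsum_ext. intros eta. apply rsum_ext. intros k.
  rewrite !rsum_map. auto.
Qed.

Lemma ceqb_inj {T U : Type} (F : T -> U) a b :
  (forall a b, F a = F b -> a = b) -> ceqb (F a) (F b) = ceqb a b.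
Proof.
  intros Hi. unfold ceqb.
  destruct (excluded_middle_informative (F a = F b)), (excluded_middle_informative (a = b));
    subst; auto; exfalso; auto.
Qed.

Lemma cdedup_map_inj {T U : Type} (F : T -> U) l : (forall a b, F a = F b -> a = b) ->
  cdedup (map F l) = map F (cdedup l).
Proof.
  intros Hi. induction l as [|a l IH]; simpl; auto.
  assert (E : existsb (ceqb (F a)) (map F l) = existsb (ceqb a) l).
  { clear IH. induction l as [|b l IHl]; simpl; auto. rewrite IHl, ceqb_inj; auto. }
  rewrite E. destruct (existsb (ceqb a) l); simpl; rewrite IH; auto.
Qed.

Lemma norm2_sum_inj_hist (F : list (nat -> option bool) -> list (nat -> option bool)) A H Kt S Pf :
  (forall a b, F a = F b -> a = b) ->
  norm2_sum A (fun y => F (H y)) Kt S Pf = norm2_sum A H Kt S Pf.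
Proof.
  intros Hi. unfold norm2_sum. rewrite <- (map_map H F), cdedup_map_inj, rsum_map by auto.
  apply rsum_ext. intros eta. apply rsum_ext. intros k. cbv zeta.
  f_equal; f_equal; apply rsum_ext; intros y; rewrite (ceqb_inj F) by auto; auto.
Qed.

Lemma fupd_rename s y a b : (forall u v, s u = s v -> u = v) ->
  (fun j => fupd y (s a) b (s j)) = fupd (fun j => y (s j)) a b.
Proof.
  intros Hi. extensionality j. unfold fupd.
  destruct (Nat.eqb_spec (s j) (s a)), (Nat.eqb_spec j a); subst; auto.
  - apply Hi in e. contradiction.
  - contradiction.
Qed.

Lemma assigns_rename s l : (forall u v, s u = s v -> u = v) ->
  map (fun y j => y (s j)) (assigns (map s l)) = assigns l.
Proof.
  intros Hi. induction l as [|a l IH]; simpl; auto.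
  rewrite <- IH. clear IH. induction (assigns (map s l)) as [|y L IHL]; simpl; auto.
  rewrite !fupd_rename by auto. rewrite IHL. auto.
Qed.

Lemma eval_map_rename s m e : eval_map (rename_map s m) e = eval_map m (rename_env s e).
Proof. extensionality a. unfold eval_map, rename_map. destruct (m a); auto. Qed.

Lemma hps_norm_rename s ha x : (forall u v, s u = s v -> u = v) ->
  hps_norm (rename s ha) x = hps_norm ha x.
Proof.
  intros Hi. unfold hps_norm. f_equal.
  rewrite !hps_norm2_sum, <- (assigns_rename s (hsu ha)), norm2_sum_map by auto.
  unfold hist_at, ket_at. simpl. f_equal.
  - extensionality y. rewrite map_map. apply map_ext. intros m. apply eval_map_rename.
  - extensionality y. apply eval_map_rename.
Qed.

Lemma app_inj_length {T : Type} (l1 l2 r1 r2 : list T) :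
  length l1 = length l2 -> l1 ++ r1 = l2 ++ r2 -> l1 = l2.
Proof.
  revert l2. induction l1 as [|a l1 IH]; intros [|b l2] H E; simpl in *; try lia; auto.
  injection E as <- E. f_equal. apply (IH l2); auto.
Qed.

Lemma eval_map_last (sa : list amap) e :
  eval_map (last sa emptymap) e = last (map (fun m => eval_map m e) sa) (fun _ => None).
Proof.
  destruct sa as [|m l] using rev_ind; [extensionality a; reflexivity|].
  rewrite map_app. simpl. rewrite !last_last. auto.
Qed.

(* Padding appends the same number of copies of the last memory to every history,
   an injective operation on histories, so the sum over histories is unchanged. *)
Lemma hps_norm_pad ha n x : hps_norm (pad_hps ha n) x = hps_norm ha x.
Proof.
  unfold hps_norm. f_equal. rewrite !hps_norm2_sum. simpl.
  set (k := (n - length (hcl ha))%nat).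
  set (F := fun l : list (nat -> option bool) => l ++ repeat (last l (fun _ => None)) k).
  assert (E : (fun y => hist_at (pad_hps ha n) (Env x y)) = (fun y => F (hist_at ha (Env x y)))).
  { extensionality y. unfold hist_at, F, pad_hps, pad. simpl. rewrite map_app, map_repeat.
    do 2 f_equal. apply eval_map_last. }
  simpl in E. rewrite E. apply norm2_sum_inj_hist.
  intros a b Hab. unfold F in Hab. apply app_inj_length in Hab; auto.
  apply (f_equal (@length _)) in Hab. rewrite !length_app, !repeat_length in Hab. lia.
Qed.

Lemma dep_only_rename {T : Type} (Xp : nat -> Prop) (l : list nat) s (p : env -> T) :
  dep_only Xp (fun j => In j l) p ->
  dep_only Xp (fun j => In j (map s l)) (fun e => p (rename_env s e)).
Proof. intros H e1 e2 H1 H2. apply H; simpl; auto. intros j Hj. apply H2, in_map. auto. Qed.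

Lemma rename_map_some s m c p :
  rename_map s m c = Some p -> exists p0, m c = Some p0 /\ p = fun e => p0 (rename_env s e).
Proof. unfold rename_map. destruct (m c); intros E; inversion E; eauto. Qed.

Lemma finite_dom_rename s m : finite_dom m -> finite_dom (rename_map s m).
Proof.
  intros (l & H). exists l. intros a Ha. apply H. intros E. apply Ha, rename_map_none. auto.
Qed.

Lemma wf_rename s ha : (forall u v, s u = s v -> u = v) -> wf_hps ha -> wf_hps (rename s ha).
Proof.
  intros Hi (N & Fq & Fc & I & H1 & H2 & H3 & H4 & H5). repeat split; simpl.
  - apply Injective_map_NoDup; auto.
  - apply finite_dom_rename; auto.
  - apply Forall_map. eapply Forall_impl; [|exact Fc]. intros. apply finite_dom_rename; auto.
  - exists I. repeat split; try apply dep_only_rename; auto.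
    + intros q p E. apply rename_map_some in E as (p0 & E & ->). apply dep_only_rename. eauto.
    + intros m Hm c p E. apply in_map_iff in Hm as (m0 & <- & Hm0).
      apply rename_map_some in E as (p0 & E & ->). apply dep_only_rename. eauto.
Qed.

Lemma no_input_rename s ha : no_input ha -> no_input (rename s ha).
Proof.
  intros (H1 & H2 & H3 & H4). repeat split; simpl; try apply dep_only_rename; auto.
  - intros q p E. apply rename_map_some in E as (p0 & E & ->). apply dep_only_rename. eauto.
  - intros m Hm c p E. apply in_map_iff in Hm as (m0 & <- & Hm0).
    apply rename_map_some in E as (p0 & E & ->). apply dep_only_rename. eauto.
Qed.

Lemma wf_pad ha n : wf_hps ha -> wf_hps (pad_hps ha n).
Proof.
  intros (N & Fq & Fc & I & H1 & H2 & H3 & H4 & H5). repeat split; simpl; auto.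
  - apply Forall_forall. intros m Hm. apply in_pad in Hm as [Hm| ->].
    + rewrite Forall_forall in Fc. auto.
    + exists []. intros a Ha. apply Ha. reflexivity.
  - exists I. repeat split; auto.
    intros m Hm c p E. apply in_pad in Hm as [Hm| ->]; [eapply H2; eauto|discriminate].
Qed.

Lemma no_input_pad ha n : no_input ha -> no_input (pad_hps ha n).
Proof.
  intros (H1 & H2 & H3 & H4). repeat split; simpl; auto.
  intros m Hm c p E. apply in_pad in Hm as [Hm| ->]; [eapply H2; eauto|discriminate].
Qed.

(** * Register disjointness under renaming and tensoring *)

Lemma nth_map_rename_map s (l : list amap) t :
  nth t (map (rename_map s) l) emptymap = rename_map s (nth t l emptymap).
Proof. revert t. induction l as [|a l IH]; intros [|t]; simpl; auto. Qed.

Lemma regs_disjoint_rename X ha s : regs_disjoint X ha -> regs_disjoint X (rename s ha).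
Proof.
  intros (T1 & T2 & T3). repeat split; simpl.
  - intros q H. apply rename_map_none. auto.
  - rewrite length_map. auto.
  - intros t c H. rewrite nth_map_rename_map. apply rename_map_none. auto.
Qed.

Lemma munion_defined (A B : amap) a : munion A B a <> None -> A a <> None \/ B a <> None.
Proof. unfold munion. destruct (A a); [left; discriminate|]. auto. Qed.

Lemma regs_disjoint_tensor X Z ha : regs_disjoint X ha -> regs_disjoint Z ha ->
  length (hcl X) = length (hcl Z) -> regs_disjoint (tensor X Z) ha.
Proof.
  intros (A1&A2&A3) (B1&B2&B3) L. repeat split; simpl.
  - intros q H. apply munion_defined in H as [H|H]; auto.
  - rewrite length_map, length_combine. lia.
  - intros t c H. destruct (Nat.lt_ge_cases t (length (hcl X))).
    + rewrite nth_map_combine in H by lia. apply munion_defined in H as [H|H]; auto.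
    + rewrite nth_overflow in H; [contradiction|]. rewrite length_map, length_combine. lia.
Qed.

Lemma regs_disjoint_of_tensor_ok Y X Z ha r : renamed_tensor Y X ha r ->
  regs_disjoint X ha -> tensor_ok Y Z -> regs_disjoint Z ha.
Proof.
  intros (_ & Hq & Hc & _) (T1 & T2 & T3) (_ & Z1 & Z2 & Z3).
  assert (LY : length (hcl Y) = length (hcl X)) by (rewrite Hc; apply length_renamed_union; auto).
  repeat split.
  - intros q Hz. destruct (hqu ha q) eqn:E; auto. exfalso.
    apply Hz, Z1. rewrite Hq, rename_map_munion. unfold munion.
    destruct (rename_map r (hqu X) q); [discriminate|]. rewrite rename_map_none. congruence.
  - congruence.
  - intros t c Hz. destruct (nth t (hcl ha) emptymap c) eqn:E; auto. exfalso.
    apply Hz, Z3. rewrite Hc, nth_renamed_union, rename_map_munion by auto. unfold munion.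
    destruct (rename_map r _ c); [discriminate|]. rewrite rename_map_none. congruence.
Qed.

Lemma munion_exchange (A B C : amap) : (forall a, munion A C a <> None -> B a = None) ->
  munion (munion A C) B = munion (munion A B) C.
Proof.
  intros H. extensionality a. specialize (H a). unfold munion in *. destruct (A a); auto.
  destruct (C a), (B a); auto. discriminate H. discriminate.
Qed.

Lemma renamed_tensor_tensor_r Y X Z ha r : renamed_tensor Y X ha r -> support_closed Z ->
  (forall j, In j (hsu Z) -> r j = j) -> length (hcl X) = length (hcl ha) -> tensor_ok Y Z ->
  renamed_tensor (tensor Y Z) (tensor X Z) ha r.
Proof.
  intros (Hsu & Hq & Hc & HP & Hs) (Z1 & Z2 & Z3 & Z4) Hid L (_ & T1 & T2 & T3).
  assert (LY : length (hcl Y) = length (hcl X)) by (rewrite Hc; apply length_renamed_union; auto).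
  assert (HZ : forall t, rename_map r (nth t (hcl Z) emptymap) = nth t (hcl Z) emptymap).
  { intros t. destruct (Nat.lt_ge_cases t (length (hcl Z))).
    - eapply rename_map_id; eauto. intros c p E. eapply Z2; eauto. apply nth_In. auto.
    - rewrite nth_overflow by auto. reflexivity. }
  repeat split; simpl.
  - rewrite !map_app, (map_ext_in r (fun j => j) (hsu Z)), map_id by auto.
    rewrite !in_app_iff, Hsu, map_app, in_app_iff. tauto.
  - rewrite !map_app, (map_ext_in r (fun j => j) (hsu Z)), map_id by auto.
    rewrite !in_app_iff, Hsu, map_app, in_app_iff. tauto.
  - rewrite Hq, !rename_map_munion, (rename_map_id (hqu Z) (hsu Z) r) by auto.
    apply munion_exchange. intros a Ha. apply T1. rewrite Hq, rename_map_munion. auto.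
  - apply nth_ext with (d := emptymap) (d' := emptymap).
    + rewrite length_map, length_combine, length_renamed_union;
        rewrite ?length_map, ?length_combine; lia.
    + intros t Ht. rewrite length_map, length_combine in Ht.
      rewrite nth_map_combine, nth_renamed_union, nth_map_combine, Hc, nth_renamed_union
        by (rewrite ?length_map, ?length_combine; lia).
      rewrite !rename_map_munion, HZ. apply munion_exchange. intros a Ha. apply T3.
      rewrite Hc, nth_renamed_union, rename_map_munion by auto. auto.
  - rewrite HP. extensionality e. rewrite (path_dep_rename_id _ (hP Z) r Z3 Hid). ring.
  - rewrite Hs. extensionality e. rewrite (path_dep_rename_id _ (hs Z) r Z4 Hid). ring.
Qed.

(** * Decompositions [h ⇛ h'] *)

Definition ancilla (X ha : HPS) : Prop :=
  wf_hps ha /\ no_input ha /\ (forall x, hps_norm ha x = 1) /\ tensor_ok X ha.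

Lemma hps_impl_iff Y X : hps_impl Y X <->
  exists ha r r', ancilla X ha /\ inverses r r' /\ renamed_tensor Y X ha r.
Proof.
  split.
  - intros (ha & Wa & Na & Nm & T & r & r' & H1 & H2 & E).
    exists ha, r, r'. refine (conj (conj Wa (conj Na (conj Nm T))) (conj (conj H1 H2) _)).
    apply renamed_tensor_iff. auto.
  - intros (ha & r & r' & (Wa & Na & Nm & T) & [H1 H2] & E).
    exists ha. refine (conj Wa (conj Na (conj Nm (conj T _)))).
    exists r, r'. refine (conj H1 (conj H2 _)). apply renamed_tensor_iff. auto.
Qed.

Lemma hps_impl_far_ancilla Y X K : wf_hps X -> hps_impl Y X ->
  exists ha r r', ancilla X ha /\ inverses r r' /\ renamed_tensor Y X ha r /\
  forall j, In j (hsu ha) -> (K <= j)%nat.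
Proof.
  intros WX HI. apply hps_impl_iff in HI as (ha & r & r' & (Wa & Na & Nm & Ts & Tr) & Hr & H).
  set (K' := Nat.max K (S (list_max (hsu ha ++ hsu X)))).
  assert (Hbelow : forall j, In j (hsu ha ++ hsu X) -> (j < K')%nat).
  { intros j Hj. apply le_list_max in Hj. lia. }
  set (s := shift_above K' (hsu ha)).
  assert (Hss : forall j, s (s j) = j).
  { apply shift_above_invol. intros j Hj. apply Hbelow, in_app_iff. auto. }
  assert (Hs_inj : forall u v, s u = s v -> u = v).
  { intros u v E. rewrite <- (Hss u), <- (Hss v), E. reflexivity. }
  assert (Hfar : forall j, In j (hsu (rename s ha)) -> (K' <= j)%nat).
  { apply in_map_shift_above. intros j Hj. apply Hbelow, in_app_iff. auto. }
  exists (rename s ha), (fun j => r (s j)), (fun j => s (r' j)).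
  refine (conj (conj _ (conj _ (conj _ (conj _ _)))) (conj _ (conj _ _))).
  - apply wf_rename; auto.
  - apply no_input_rename; auto.
  - intros x. rewrite hps_norm_rename; auto.
  - intros j Hj Hj'. apply Hfar in Hj'.
    assert (j < K')%nat by (apply Hbelow, in_app_iff; auto). lia.
  - apply regs_disjoint_rename. exact Tr.
  - apply inverses_comp; auto. split; exact Hss.
  - apply renamed_tensor_rename_ancilla; auto using wf_support_closed.
    intros j Hj. apply shift_above_out; [apply Hbelow, in_app_iff; auto|]. apply Ts, Hj.
  - intros j Hj. apply Hfar in Hj. lia.
Qed.

Lemma renamed_tensor_reindex Y X ha r g L : support_closed X -> support_closed ha ->
  renamed_tensor Y X ha r ->
  (forall j, In j (hsu X ++ hsu ha) -> In j L /\ g j = r j) ->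
  (forall a b, In a L -> In b L -> g a = g b -> a = b) ->
  exists r2 r2', inverses r2 r2' /\ (forall j, In j L -> r2 j = g j) /\ renamed_tensor Y X ha r2.
Proof.
  intros CX Ca H Hg Hinj. destruct (inverses_extend g L Hinj) as (r2 & r2' & Hr2 & E2).
  exists r2, r2'. refine (conj Hr2 (conj E2 _)).
  apply (renamed_tensor_ext Y X ha r); auto.
  intros j Hj. rewrite E2 by apply Hg, Hj. symmetry. apply Hg, Hj.
Qed.

(* The renaming is extended to the new variables of [sem P X] by shifting them above
   those of [Y]; the ancilla is first moved above all variables of [sem P X]. *)
Lemma hps_impl_sem Y X P : wf_hps X -> hps_impl Y X -> uses_only X P ->
  hps_impl (sem P Y) (sem P X).
Proof.
  intros WX HI U.
  set (K := S (list_max (hsu (sem P X)))).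
  destruct (hps_impl_far_ancilla Y X K WX HI)
    as (ha & r & r' & (Wa & Na & Nm & Ts & Tr) & Hr & H & Hfar).
  assert (Hsem_below : forall j, In j (hsu (sem P X)) -> (j < K)%nat).
  { intros j Hj. apply le_list_max in Hj. unfold K. lia. }
  set (A := hsu X ++ hsu ha). set (L := hsu (sem P X) ++ hsu ha).
  set (mX := list_max (hsu X)). set (mY := list_max (hsu Y)).
  assert (Hold : forall j, In j A -> (r j <= mY)%nat).
  { intros j Hj. apply le_list_max, (proj1 H), in_map, Hj. }
  assert (Hnew : forall j, In j L -> ~ In j A -> (mX < j)%nat).
  { intros j Hj Hn. unfold L, A in *. rewrite !in_app_iff in Hj, Hn.
    destruct Hj as [Hj|Hj]; [|tauto].
    apply in_hsu_sem in Hj as [Hj|Hj]; [tauto|unfold mX; lia]. }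
  destruct (renamed_tensor_reindex Y X ha r (piecewise A r (fun j => j - mX + mY)%nat) L)
    as (r2 & r2' & Hr2 & E2 & H2); auto using wf_support_closed.
  { intros j Hj. unfold piecewise. destruct (in_dec Nat.eq_dec j A); [|contradiction].
    split; auto. unfold L, A in *. rewrite in_app_iff in *. rewrite in_hsu_sem. tauto. }
  { apply piecewise_injective.
    - intros a b _ _. apply (inverses_inj _ _ _ _ Hr).
    - intros a b Ha Hb Ha' Hb'. pose proof (Hnew a Ha Ha'). pose proof (Hnew b Hb Hb'). lia.
    - intros a b Ha Hb Hb'. pose proof (Hold a Ha). pose proof (Hnew b Hb Hb'). lia. }
  apply hps_impl_iff. exists (pad_hps ha (length (hcl (sem P X)))), r2, r2'.
  refine (conj (conj _ (conj _ (conj _ (conj _ _)))) (conj Hr2 _)).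
  - apply wf_pad; auto.
  - apply no_input_pad; auto.
  - intros x. rewrite hps_norm_pad; auto.
  - intros j Hj Hj'. apply Hfar in Hj'. apply Hsem_below in Hj. lia.
  - apply regs_disjoint_sem; auto. eapply uses_only_avoids; eauto.
  - apply sem_renamed_tensor; auto.
    + exact (fun a b => inverses_inj _ _ a b Hr2).
    + eapply uses_only_avoids; eauto.
    + intros j Hj Hj'. apply Hfar in Hj. apply Hsem_below in Hj'. lia.
    + intros j Hj Hn. rewrite E2 by (apply in_app_iff; auto). unfold piecewise.
      destruct (in_dec Nat.eq_dec j A) as [Hja|]; [exfalso|reflexivity].
      apply in_app_iff in Hja as [Hja|Hja]; [contradiction|].
      apply Hfar in Hja. apply Hsem_below in Hj. lia.
Qed.

(* The renaming is extended by the identity on the support of [Z], which the ancilla,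
   moved above it, does not meet. *)
Lemma hps_impl_tensor_r Y X Z : wf_hps X -> wf_hps Z -> hps_impl Y X ->
  tensor_ok Y Z -> tensor_ok X Z -> hps_impl (tensor Y Z) (tensor X Z).
Proof.
  intros WX WZ HI TYZ TXZ.
  set (K := S (list_max (hsu Z))).
  destruct (hps_impl_far_ancilla Y X K WX HI)
    as (ha & r & r' & (Wa & Na & Nm & Ts & Tr) & Hr & H & Hfar).
  assert (HZ_ha : forall j, In j (hsu Z) -> ~ In j (hsu ha)).
  { intros j Hj Hj'. apply Hfar in Hj'. apply le_list_max in Hj. unfold K in Hj'. lia. }
  destruct (renamed_tensor_reindex Y X ha r (piecewise (hsu Z) (fun j => j) r)
              ((hsu X ++ hsu ha) ++ hsu Z))
    as (r2 & r2' & Hr2 & E2 & H2); auto using wf_support_closed.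
  { intros j Hj. split; [apply in_app_iff; auto|]. unfold piecewise.
    destruct (in_dec Nat.eq_dec j (hsu Z)) as [Iz|]; auto. exfalso.
    apply in_app_iff in Hj as [Hj|Hj]; [apply (proj1 TXZ j)|apply (HZ_ha j)]; auto. }
  { apply piecewise_injective.
    - intros a b _ _ E. exact E.
    - intros a b _ _ _ _. apply (inverses_inj _ _ _ _ Hr).
    - intros a b Ha Hb Hb' E. apply (proj1 TYZ (r b)); [|rewrite <- E; exact Ha].
      apply (proj1 H), in_map. rewrite in_app_iff in Hb. tauto. }
  assert (Hid : forall j, In j (hsu Z) -> r2 j = j).
  { intros j Hj. rewrite E2 by (apply in_app_iff; auto). unfold piecewise.
    destruct (in_dec Nat.eq_dec j (hsu Z)); [auto|contradiction]. }
  assert (TZ : regs_disjoint Z ha) by (eapply regs_disjoint_of_tensor_ok; eauto).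
  apply hps_impl_iff. exists ha, r2, r2'.
  refine (conj (conj Wa (conj Na (conj Nm (conj _ _)))) (conj Hr2 _)).
  - intros j Hj. simpl in Hj. apply in_app_iff in Hj as [Hj|Hj]; auto.
  - apply regs_disjoint_tensor; auto. apply TXZ.
  - apply renamed_tensor_tensor_r; auto using wf_support_closed. apply Tr.
Qed.

Definition hps_equiv (h1 h2 : HPS) : Prop :=
  (forall j, In j (hsu h1) <-> In j (hsu h2)) /\ hqu h1 = hqu h2 /\ hcl h1 = hcl h2 /\
  hP h1 = hP h2 /\ hs h1 = hs h2.

Lemma munion_comm (A B : amap) : (forall a, A a <> None -> B a = None) -> munion A B = munion B A.
Proof.
  intros H. extensionality a. specialize (H a). unfold munion in *.
  destruct (A a), (B a); auto. discriminate H. discriminate.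
Qed.

Lemma tensor_comm A B : tensor_ok A B -> hps_equiv (tensor A B) (tensor B A).
Proof.
  intros (_ & Tq & L & Tc). repeat split; simpl.
  - rewrite !in_app_iff. tauto.
  - rewrite !in_app_iff. tauto.
  - apply munion_comm; auto.
  - apply nth_ext with (d := emptymap) (d' := emptymap).
    + rewrite !length_map, !length_combine. lia.
    + intros t Ht. rewrite length_map, length_combine in Ht.
      rewrite !nth_map_combine by lia. apply munion_comm; auto.
  - extensionality e. ring.
  - extensionality e. ring.
Qed.

Lemma hps_impl_equiv Y Y' X X' :
  hps_equiv Y Y' -> hps_equiv X X' -> hps_impl Y X -> hps_impl Y' X'.
Proof.
  intros (SY & QY & CY & PY & sY) (SX & QX & CX & PX & sX) HI.
  apply hps_impl_iff in HI
    as (ha & r & r' & (Wa & Na & Nm & Ts & Tr) & Hr & Hsu & Hq & Hc & HP & Hs).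
  apply hps_impl_iff. exists ha, r, r'.
  refine (conj (conj Wa (conj Na (conj Nm (conj _ _)))) (conj Hr _)).
  - intros j Hj. apply Ts, SX, Hj.
  - unfold regs_disjoint in Tr. rewrite <- QX, <- CX. exact Tr.
  - repeat split; try congruence.
    + intros Hj. apply SY, Hsu, in_map_iff in Hj as (x & <- & Hx). apply in_map.
      rewrite in_app_iff, <- SX, <- in_app_iff. exact Hx.
    + intros Hj. apply SY, Hsu. apply in_map_iff in Hj as (x & <- & Hx). apply in_map.
      rewrite in_app_iff, SX, <- in_app_iff. exact Hx.
    + rewrite <- PY, HP, PX. reflexivity.
    + rewrite <- sY, Hs, sX. reflexivity.
Qed.

Theorem mainTheorem7 (h h' h'' : HPS) (P : prog) :
  wf_hps h -> wf_hps h' -> wf_hps h'' ->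
  hps_impl h h' ->
  valid_prog P -> uses_only h' P ->
  tensor_ok h h'' ->
  ((tensor_ok h' h'' ->
      hps_impl (tensor h h'') (tensor h' h'') /\
      hps_impl (tensor h'' h) (tensor h'' h'))
   /\ hps_impl (sem P h) (sem P h')).
Proof.
  intros _ W' W'' HI _ U T. split.
  - intros T'. assert (HT := hps_impl_tensor_r h h' h'' W' W'' HI T T').
    split; auto. apply (hps_impl_equiv _ _ _ _ (tensor_comm _ _ T) (tensor_comm _ _ T') HT).
  - apply hps_impl_sem; auto.
Qed.
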